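(* Let $g\in\mathcal{H}(\mathbb{D})$ be zero-free, let $h$ be a branch of the logarithm of $g$, and for $\beta\in\mathbb{R}$ set $g^\beta:=e^{\beta h}$. Then for every $\beta\in\mathbb{R}$ and every $\varepsilon\in\mathbb{R}\setminus\{1\}$, \[ S_{g^\beta}T_{g^\beta}^2=\frac{(2\beta-1)\beta}{1-\varepsilon}\,T_gT_{g^{1-\varepsilon}}M_{g^{2\beta-2+\varepsilon}}T_{g^\beta}+\frac{\beta^2}{1-\varepsilon}\,T_gT_{g^{1-\varepsilon}}M_{g^{3\beta-2+\varepsilon}} \] as operators on $\mathcal{H}(\mathbb{D})$.
   Context: $\mathcal{H}(\mathbb{D})$ is the space of analytic functions on the unit disc. For analytic $u$: $M_uf=uf$, $T_uf(z)=\int_0^zf(\zeta)u'(\zeta)\,d\zeta$, $S_uf(z)=\int_0^zf'(\zeta)u(\zeta)\,d\zeta$. *)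

From Stdlib Require Import Reals ClassicalEpsilon.
From Coquelicot Require Import Coquelicot.
Open Scope R_scope.

Definition inD (z : C) : Prop := Cmod z < 1.

Definition Cderivable (f : C -> C) (z : C) : Prop :=
  exists l : C, @is_derive C_AbsRing C_NormedModule f z l.

Definition holoD (f : C -> C) : Prop := forall z, inD z -> Cderivable f z.

(* the complex derivative f'(z) (meaningful where f is differentiable) *)
Definition Cderiv (f : C -> C) (z : C) : C :=
  epsilon (inhabits (RtoC 0))
    (fun l : C => @is_derive C_AbsRing C_NormedModule f z l).

Definition Cexp (z : C) : C :=
  (exp (fst z) * cos (snd z), exp (fst z) * sin (snd z)).

(* integral from 0 to z along the segment [0,z]: zeta = t z, d zeta = z dt *)
Definition cint0 (F : C -> C) (z : C) : C :=
  Cmult z (@RInt C_R_CompleteNormedModule (fun t : R => F (Cmult (RtoC t) z)) 0 1).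

Definition Mop (u f : C -> C) : C -> C := fun z => Cmult (u z) (f z).
Definition Top (u f : C -> C) : C -> C :=
  fun z => cint0 (fun w => Cmult (f w) (Cderiv u w)) z.
Definition Sop (u f : C -> C) : C -> C :=
  fun z => cint0 (fun w => Cmult (Cderiv f w) (u w)) z.

Definition cpow (h : C -> C) (beta : R) : C -> C :=
  fun z => Cexp (Cmult (RtoC beta) (h z)).

(* Both sides vanish at 0, so it suffices to compare derivatives. With u = g^beta,
   (S_u T_u^2 f)' = (T_u f) u' u = beta h' g^(2 beta) T_u f, whereas the derivative of the
   right-hand side is g' = h' g times
     c1 T_{g^(1-eps)} M_{g^(2 beta-2+eps)} T_u f + c2 T_{g^(1-eps)} M_{g^(3 beta-2+eps)} f,
   and this combination equals beta g^(2 beta-1) T_u f: both sides vanish at 0 and their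
   derivatives agree because c1 (1 - eps) = (2 beta - 1) beta and c2 (1 - eps) = beta^2.

   Differentiating z |-> int_0^z F along the segment [0, z] requires F holomorphic, and
   Goursat's theorem provides the primitive. As the integrands f u' involve derivatives,
   one also needs that F' is holomorphic with F; this follows from a Cauchy integral
   formula over a small triangle, differentiated under the integral sign. *)

From Stdlib Require Import Reals Lra Lia ClassicalEpsilon.
From Coquelicot Require Import Coquelicot.
Open Scope R_scope.

Lemma is_derive_eps_delta {K : AbsRing} {V : NormedModule K} (f : K -> V) x l :
  is_derive f x l <->
  (forall eps, 0 < eps -> exists del, 0 < del /\ forall y,
     norm (minus y x) < del ->
     norm (minus (minus (f y) (f x)) (scal (minus y x) l)) <= eps * norm (minus y x)).
Proof.
  split.
  - intros [_ H] eps Heps.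
    destruct (H x (fun P HP => HP) (mkposreal eps Heps)) as [del Hd].
    exists del; split; [apply cond_pos|].
    intros y Hy. apply Hd. exact (norm_compat1 (V := AbsRing_NormedModule K) x y del Hy).
  - intros H. split; [apply is_linear_scal_l|].
    intros x0 Hx0.
    apply (is_filter_lim_locally_unique (V := AbsRing_NormedModule K)) in Hx0. subst x0.
    intros eps. destruct (H eps (cond_pos eps)) as [del [Hd H']].
    set (nf := norm_factor (V := AbsRing_NormedModule K)).
    assert (Hnf : 0 < nf) by apply norm_factor_gt_0.
    exists (mkposreal (del / nf) (Rdiv_lt_0_compat _ _ Hd Hnf)). intros y Hy.
    apply H'. apply (norm_compat2 (V := AbsRing_NormedModule K)) in Hy. simpl in Hy.
    replace del with (nf * (del / nf)) by (field; lra). exact Hy.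
Qed.

Lemma derivable_pt_lim_eps_delta f x l : derivable_pt_lim f x l ->
  forall eps, 0 < eps -> exists del, 0 < del /\ forall h, Rabs h < del ->
    Rabs (f (x + h) - f x - l * h) <= eps * Rabs h.
Proof.
  intros H eps Heps. destruct (H eps Heps) as [d Hd].
  exists d. split; [apply cond_pos|]. intros h Hh.
  destruct (Req_dec h 0) as [->|Hn].
  - rewrite Rplus_0_r, Rabs_R0. replace (f x - f x - l * 0) with 0 by ring.
    rewrite Rabs_R0. lra.
  - replace (f (x + h) - f x - l * h) with (((f (x + h) - f x) / h - l) * h)
      by (field; auto).
    rewrite Rabs_mult. apply Rmult_le_compat_r; [apply Rabs_pos|].
    specialize (Hd h Hn Hh). lra.
Qed.

Lemma half_pow_pos n : 0 < (/2) ^ n.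
Proof. apply pow_lt. lra. Qed.

Lemma half_pow_le n m : (n <= m)%nat -> (/2) ^ m <= (/2) ^ n.
Proof. intros H. induction H; [lra|]. simpl. pose proof (half_pow_pos m). lra. Qed.

Lemma half_pow_lt eps : 0 < eps -> exists n, (/2) ^ n < eps.
Proof.
  intros H. destruct (pow_lt_1_zero (/2) ltac:(rewrite Rabs_right; lra) eps H) as [N HN].
  exists N. specialize (HN N (le_n N)).
  rewrite Rabs_right in HN; [exact HN | apply Rle_ge, pow_le; lra].
Qed.

Lemma le_0_of_le_half_pow c : (forall n, c <= (/2) ^ n) -> c <= 0.
Proof.
  intros H. apply Rle_plus_epsilon. intros eps Heps.
  destruct (half_pow_lt eps Heps) as [n Hn]. specialize (H n). lra.
Qed.

Lemma half_pow_cauchy_limit (x : nat -> R) :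
  (forall n m, (n <= m)%nat -> Rabs (x m - x n) <= (/2) ^ n) ->
  exists l, forall n, Rabs (l - x n) <= (/2) ^ n.
Proof.
  intros H.
  assert (Hc : Cauchy_crit x).
  { intros eps Heps. destruct (half_pow_lt eps Heps) as [N HN]. exists N.
    intros n m Hn Hm. unfold Rdist.
    destruct (Nat.le_ge_cases n m) as [E|E].
    - rewrite Rabs_minus_sym. eapply Rle_lt_trans; [apply (H n m E)|].
      eapply Rle_lt_trans; [apply half_pow_le; exact Hn | exact HN].
    - eapply Rle_lt_trans; [apply (H m n E)|].
      eapply Rle_lt_trans; [apply half_pow_le; exact Hm | exact HN]. }
  destruct (Rcomplete.R_complete x Hc) as [l Hl]. exists l. intros n.
  apply Rle_plus_epsilon. intros eps Heps. destruct (Hl eps Heps) as [N HN].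
  specialize (HN (Nat.max n N) ltac:(lia)). specialize (H n (Nat.max n N) ltac:(lia)).
  unfold Rdist in HN.
  replace (l - x n) with ((x (Nat.max n N) - x n) - (x (Nat.max n N) - l)) by ring.
  eapply Rle_trans; [apply Rabs_triang|]. rewrite Rabs_Ropp. lra.
Qed.

Lemma le_0_of_le_eps_mult x K : 0 <= K -> (forall eps, 0 < eps -> x <= eps * K) -> x <= 0.
Proof.
  intros HK H. apply Rle_plus_epsilon. intros e He.
  apply Rle_trans with (e / (K + 1) * K); [apply H; apply Rdiv_lt_0_compat; lra|].
  apply Rle_trans with (e / (K + 1) * (K + 1)); [apply Rmult_le_compat_l; [|lra]|].
  - apply Rlt_le, Rdiv_lt_0_compat; lra.
  - right. field. lra.
Qed.

Open Scope C_scope.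

(** * Complex derivatives *)

Definition is_Cderive (F : C -> C) (z l : C) : Prop :=
  forall eps, (0 < eps)%R -> exists del, (0 < del)%R /\ forall w,
    (Cmod (w - z) < del)%R -> (Cmod (F w - F z - (w - z) * l) <= eps * Cmod (w - z))%R.

Lemma is_derive_Cderive F z l :
  @is_derive C_AbsRing C_NormedModule F z l <-> is_Cderive F z l.
Proof. exact (is_derive_eps_delta F z l). Qed.

Lemma is_Cderive_const c z : is_Cderive (fun _ => c) z 0.
Proof.
  intros eps Heps. exists 1%R. split; [lra|]. intros w _.
  replace (c - c - (w - z) * 0) with (RtoC 0) by ring. rewrite Cmod_0.
  apply Rmult_le_pos; [lra | apply Cmod_ge_0].
Qed.

Lemma is_Cderive_id z : is_Cderive (fun w => w) z 1.
Proof.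
  intros eps Heps. exists 1%R. split; [lra|]. intros w _.
  replace (w - z - (w - z) * 1) with (RtoC 0) by ring. rewrite Cmod_0.
  apply Rmult_le_pos; [lra | apply Cmod_ge_0].
Qed.

Lemma is_Cderive_plus F G z a b :
  is_Cderive F z a -> is_Cderive G z b -> is_Cderive (fun w => F w + G w) z (a + b).
Proof.
  rewrite <- !is_derive_Cderive.
  exact (is_derive_plus (K := C_AbsRing) (V := C_NormedModule) F G z a b).
Qed.

Lemma is_Cderive_minus F G z a b :
  is_Cderive F z a -> is_Cderive G z b -> is_Cderive (fun w => F w - G w) z (a - b).
Proof.
  rewrite <- !is_derive_Cderive.
  exact (is_derive_minus (K := C_AbsRing) (V := C_NormedModule) F G z a b).
Qed.

Lemma is_Cderive_mult F G z a b :
  is_Cderive F z a -> is_Cderive G z b ->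
  is_Cderive (fun w => F w * G w) z (a * G z + F z * b).
Proof.
  intros Ha Hb.
  pose (equiv := @is_derive_eps_delta C_AbsRing (AbsRing_NormedModule C_AbsRing)).
  exact (proj1 (equiv (fun w => F w * G w) z _)
    (is_derive_mult F G z a b (proj2 (equiv F z a) Ha) (proj2 (equiv G z b) Hb) Cmult_comm)).
Qed.

Lemma is_Cderive_comp F G z a b :
  is_Cderive F (G z) a -> is_Cderive G z b -> is_Cderive (fun w => F (G w)) z (b * a).
Proof.
  intros Ha Hb. apply is_derive_Cderive. apply is_derive_Cderive in Ha.
  exact (is_derive_comp (V := C_NormedModule) F G z a b Ha
    (proj2 (@is_derive_eps_delta C_AbsRing (AbsRing_NormedModule C_AbsRing) G z b) Hb)).
Qed.

Lemma is_Cderive_ext F G z l :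
  (forall w, F w = G w) -> is_Cderive F z l -> is_Cderive G z l.
Proof.
  intros E H eps Heps. destruct (H eps Heps) as [d [Hd H']].
  exists d; split; auto. intros w Hw. rewrite <- !E. auto.
Qed.

Lemma is_Cderive_ext_loc F G z l :
  (exists del, (0 < del)%R /\ forall w, (Cmod (w - z) < del)%R -> F w = G w) ->
  is_Cderive F z l -> is_Cderive G z l.
Proof.
  intros [d0 [Hd0 E]] H eps Heps. destruct (H eps Heps) as [d [Hd H']].
  exists (Rmin d d0); split; [apply Rmin_pos; auto|].
  assert (Ez : F z = G z) by (apply E; unfold Cminus; rewrite Cplus_opp_r, Cmod_0; lra).
  intros w Hw. rewrite <- Ez, <- E.
  - apply H'. eapply Rlt_le_trans; [exact Hw | apply Rmin_l].
  - eapply Rlt_le_trans; [exact Hw | apply Rmin_r].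
Qed.

Lemma is_Cderive_eq F z l l' : is_Cderive F z l -> l = l' -> is_Cderive F z l'.
Proof. intros H <-. exact H. Qed.

Lemma is_Cderive_scal c F z a :
  is_Cderive F z a -> is_Cderive (fun w => c * F w) z (c * a).
Proof.
  intros H. apply (is_Cderive_eq _ _ (0 * F z + c * a)); [|ring].
  apply (is_Cderive_mult (fun _ => c)); [apply is_Cderive_const | exact H].
Qed.

Lemma Cmod_minus_sym (a b : C) : Cmod (a - b) = Cmod (b - a).
Proof. replace (a - b) with (- (b - a)) by ring. apply Cmod_opp. Qed.

Lemma Cmod_minus_eq_0 (w z : C) : Cmod (w - z) = 0%R -> w = z.
Proof.
  intros E. apply Cmod_eq_0 in E. replace w with ((w - z) + z) by ring. rewrite E. ring.
Qed.

Lemma is_Cderive_unique F z l1 l2 : is_Cderive F z l1 -> is_Cderive F z l2 -> l1 = l2.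
Proof.
  intros H1 H2. apply Cmod_minus_eq_0.
  apply Rle_antisym; [| apply Cmod_ge_0]. apply Rnot_lt_le. intro Hpos.
  set (e := (Cmod (l1 - l2) / 4)%R).
  destruct (H1 e ltac:(unfold e; lra)) as [d1 [Hd1 K1]].
  destruct (H2 e ltac:(unfold e; lra)) as [d2 [Hd2 K2]].
  set (h := (Rmin d1 d2 / 2)%R).
  assert (Hh : (0 < h)%R) by (unfold h; pose proof (Rmin_pos _ _ Hd1 Hd2); lra).
  assert (Ew : Cmod (z + RtoC h - z) = h).
  { replace (z + RtoC h - z) with (RtoC h) by ring. rewrite Cmod_R. apply Rabs_right; lra. }
  specialize (K1 (z + RtoC h)). specialize (K2 (z + RtoC h)). rewrite Ew in K1, K2.
  specialize (K1 ltac:(unfold h; pose proof (Rmin_l d1 d2); lra)).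
  specialize (K2 ltac:(unfold h; pose proof (Rmin_r d1 d2); lra)).
  assert (T : (Cmod ((z + RtoC h - z) * (l1 - l2)) <= e * h + e * h)%R).
  { set (w := z + RtoC h) in *.
    replace ((w - z) * (l1 - l2))
      with (- (F w - F z - (w - z) * l1) + (F w - F z - (w - z) * l2)) by ring.
    eapply Rle_trans; [apply Cmod_triangle|]. rewrite Cmod_opp. lra. }
  rewrite Cmod_mult, Ew in T. unfold e in T. nra.
Qed.

Lemma Cderiv_correct F z : Cderivable F z -> is_Cderive F z (Cderiv F z).
Proof. intros H. apply is_derive_Cderive. unfold Cderiv. apply epsilon_spec. exact H. Qed.

Lemma is_Cderive_Cderiv F z l : is_Cderive F z l -> Cderiv F z = l.
Proof.
  intros H. apply (is_Cderive_unique F z); [|exact H].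
  apply Cderiv_correct. exists l. apply is_derive_Cderive. exact H.
Qed.

Lemma is_Cderive_Cinv (z : C) : z <> 0 -> is_Cderive (fun w => / w) z (- / (z * z)).
Proof.
  intros Hz eps Heps.
  assert (Hm : (0 < Cmod z)%R) by (apply Cmod_gt_0; exact Hz).
  assert (Hm3 : (0 < eps * (Cmod z * Cmod z * Cmod z) / 2)%R).
  { apply Rdiv_lt_0_compat; [|lra]. repeat apply Rmult_lt_0_compat; auto. }
  exists (Rmin (Cmod z / 2) (eps * (Cmod z * Cmod z * Cmod z) / 2)).
  split; [apply Rmin_pos; lra|]. intros w Hw.
  pose proof (Rmin_l (Cmod z / 2) (eps * (Cmod z * Cmod z * Cmod z) / 2)).
  pose proof (Rmin_r (Cmod z / 2) (eps * (Cmod z * Cmod z * Cmod z) / 2)).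
  assert (Hwm : (Cmod z / 2 <= Cmod w)%R).
  { assert (T := Cmod_triangle (z - w) w). replace (z - w + w) with z in T by ring.
    rewrite Cmod_minus_sym in T. lra. }
  assert (Hw0 : w <> 0) by (intro E; rewrite E, Cmod_0 in Hwm; lra).
  replace (/ w - / z - (w - z) * - / (z * z)) with ((w - z) * (w - z) / (w * (z * z)))
    by (field; auto).
  rewrite Cmod_div, !Cmod_mult by (repeat apply Cmult_neq_0; auto).
  assert (Hwz := Cmod_ge_0 (w - z)).
  assert (Hden : (0 < Cmod w * (Cmod z * Cmod z))%R) by (apply Rmult_lt_0_compat; nra).
  apply (Rmult_le_reg_r _ _ _ Hden). unfold Rdiv.
  rewrite Rmult_assoc, Rinv_l, Rmult_1_r by lra.
  assert (eps * Cmod (w - z) * (Cmod z / 2 * (Cmod z * Cmod z))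
          <= eps * Cmod (w - z) * (Cmod w * (Cmod z * Cmod z)))%R.
  { apply Rmult_le_compat_l; [nra|]. apply Rmult_le_compat_r; nra. }
  nra.
Qed.

Lemma is_Cderive_Cinv_shift (z w : C) : w <> z ->
  is_Cderive (fun x => / (x - z)) w (- / ((w - z) * (w - z))).
Proof.
  intros H. apply (is_Cderive_eq _ _ ((1 - 0) * (- / ((w - z) * (w - z))))); [|ring].
  apply (is_Cderive_comp (fun y => / y) (fun x => x - z)).
  - apply is_Cderive_Cinv. intro E. apply H. apply Cmod_minus_eq_0. rewrite E. apply Cmod_0.
  - apply is_Cderive_minus; [apply is_Cderive_id | apply is_Cderive_const].
Qed.

Lemma Cexp_plus (a b : C) : Cexp (a + b) = Cexp a * Cexp b.
Proof.
  destruct a as [a1 a2], b as [b1 b2]. unfold Cexp, Cmult, Cplus. simpl.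
  rewrite exp_plus, cos_plus, sin_plus. f_equal; ring.
Qed.

Lemma Cexp_0 : Cexp 0 = 1.
Proof. unfold Cexp, RtoC. simpl. rewrite exp_0, cos_0, sin_0. f_equal; ring. Qed.

Lemma Cexp_neq_0 (a : C) : Cexp a <> 0.
Proof.
  intro E. apply C1_nz. rewrite <- Cexp_0, <- (Cplus_opp_r a), Cexp_plus, E. ring.
Qed.

Lemma Cmod_le_Rabs_sum (u v : R) : (Cmod (u, v) <= Rabs u + Rabs v)%R.
Proof.
  unfold Cmod. simpl. pose proof (Rabs_pos u). pose proof (Rabs_pos v).
  rewrite <- (sqrt_Rsqr (Rabs u + Rabs v)) by lra.
  apply sqrt_le_1_alt. rewrite !Rmult_1_r.
  change (u * u + v * v <= (Rabs u + Rabs v)²)%R. rewrite <- !Rsqr_def.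
  rewrite (Rsqr_abs u), (Rsqr_abs v). unfold Rsqr. nra.
Qed.

(* Re and Im of e^(x+iy) - 1 - (x+iy) are combinations of the first-order
   remainders of exp, cos and sin. *)
Lemma Cexp_remainder_le x y e : (0 <= e <= 1)%R -> (Rabs x <= e)%R ->
  (Rabs (exp x - 1 - x) <= e * Rabs x)%R -> (Rabs (cos y - 1) <= e * Rabs y)%R ->
  (Rabs (sin y - y) <= e * Rabs y)%R ->
  (Cmod (Cexp (x, y) - 1 - (x, y) * 1) <= e * (Rabs x + 7 * Rabs y))%R.
Proof.
  intros He Hx B1 B2 B3. pose proof (Rabs_pos x). pose proof (Rabs_pos y).
  replace (Cexp (x, y) - 1 - (x, y) * 1) with
    (((exp x - 1 - x) * cos y + (1 + x) * (cos y - 1))%R,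
     ((exp x - 1) * sin y + (sin y - y))%R)
    by (unfold Cexp, Cminus, Cplus, Copp, Cmult; simpl; f_equal; ring).
  eapply Rle_trans; [apply Cmod_le_Rabs_sum|].
  assert (Hcos : (Rabs (cos y) <= 1)%R) by (apply Rabs_le; apply COS_bound).
  assert (H1x : (Rabs (1 + x) <= 2)%R).
  { eapply Rle_trans; [apply Rabs_triang|]. rewrite Rabs_R1. lra. }
  assert (Hsin : (Rabs (sin y) <= 2 * Rabs y)%R).
  { replace (sin y) with ((sin y - y) + y)%R by ring.
    eapply Rle_trans; [apply Rabs_triang|]. nra. }
  assert (Hexp : (Rabs (exp x - 1) <= 2 * e)%R).
  { replace (exp x - 1)%R with ((exp x - 1 - x) + x)%R by ring.
    eapply Rle_trans; [apply Rabs_triang|]. nra. }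
  assert (Re : (Rabs ((exp x - 1 - x) * cos y + (1 + x) * (cos y - 1))
                <= e * Rabs x + 2 * (e * Rabs y))%R).
  { eapply Rle_trans; [apply Rabs_triang|]. rewrite !Rabs_mult.
    apply Rplus_le_compat.
    - pose proof (Rabs_pos (exp x - 1 - x)). nra.
    - apply Rmult_le_compat; auto using Rabs_pos. }
  assert (Im : (Rabs ((exp x - 1) * sin y + (sin y - y)) <= 4 * e * Rabs y + e * Rabs y)%R).
  { eapply Rle_trans; [apply Rabs_triang|]. rewrite Rabs_mult.
    apply Rplus_le_compat; [|lra].
    replace (4 * e * Rabs y)%R with (2 * e * (2 * Rabs y))%R by ring.
    apply Rmult_le_compat; auto using Rabs_pos. }
  lra.
Qed.

Lemma is_Cderive_Cexp_0 : is_Cderive Cexp 0 1.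
Proof.
  intros eps Heps. set (e := Rmin (eps / 8) 1).
  assert (He : (0 < e)%R) by (apply Rmin_pos; lra).
  assert (He1 : (e <= 1)%R) by apply Rmin_r.
  assert (He8 : (e <= eps / 8)%R) by apply Rmin_l.
  clearbody e.
  destruct (derivable_pt_lim_eps_delta _ _ _ (derivable_pt_lim_exp 0) e He) as [d1 [Hd1 B1]].
  destruct (derivable_pt_lim_eps_delta _ _ _ (derivable_pt_lim_cos 0) e He) as [d2 [Hd2 B2]].
  destruct (derivable_pt_lim_eps_delta _ _ _ (derivable_pt_lim_sin 0) e He) as [d3 [Hd3 B3]].
  rewrite exp_0, sin_0, cos_0 in *.
  exists (Rmin (Rmin d1 d2) (Rmin d3 e)). split; [repeat apply Rmin_pos; auto|].
  intros w Hw. rewrite Cexp_0. replace (w - 0) with w in * by ring. destruct w as [x y].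
  pose proof (Rmin_l (Rmin d1 d2) (Rmin d3 e)). pose proof (Rmin_r (Rmin d1 d2) (Rmin d3 e)).
  pose proof (Rmin_l d1 d2). pose proof (Rmin_r d1 d2).
  pose proof (Rmin_l d3 e). pose proof (Rmin_r d3 e).
  assert (Hx := re_le_Cmod (x, y)). assert (Hy := Rmax_Cmod (x, y)). simpl in Hx, Hy.
  pose proof (Rmax_r (Rabs x) (Rabs y)).
  specialize (B1 x ltac:(lra)). specialize (B2 y ltac:(lra)). specialize (B3 y ltac:(lra)).
  rewrite !Rplus_0_l in B1, B2, B3. rewrite Rmult_1_l in B1, B3.
  rewrite Ropp_0, Rmult_0_l, Rminus_0_r in B2. rewrite Rminus_0_r in B3.
  eapply Rle_trans; [apply (Cexp_remainder_le x y e); auto; lra|].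
  pose proof (Rabs_pos x). pose proof (Rabs_pos y). nra.
Qed.

Lemma is_Cderive_Cexp (z : C) : is_Cderive Cexp z (Cexp z).
Proof.
  intros eps Heps.
  assert (Hm : (0 < Cmod (Cexp z))%R) by (apply Cmod_gt_0; apply Cexp_neq_0).
  destruct (is_Cderive_Cexp_0 (eps / Cmod (Cexp z))%R) as [d [Hd H]].
  { apply Rdiv_lt_0_compat; auto. }
  exists d; split; auto. intros w Hw.
  specialize (H (w - z)). replace (w - z - 0) with (w - z) in H by ring.
  specialize (H Hw). rewrite Cexp_0 in H.
  replace (Cexp w - Cexp z - (w - z) * Cexp z)
    with (Cexp z * (Cexp (w - z) - 1 - (w - z) * 1))
    by (replace (Cexp w) with (Cexp z * Cexp (w - z))
          by (rewrite <- Cexp_plus; f_equal; ring); ring).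
  rewrite Cmod_mult.
  apply (Rmult_le_compat_l (Cmod (Cexp z))) in H; [|lra].
  eapply Rle_trans; [exact H|]. right. field. lra.
Qed.

Lemma is_Cderive_div N K z n k : is_Cderive N z n -> is_Cderive K z k -> K z <> 0 ->
  is_Cderive (fun w => N w / K w) z ((n * K z - N z * k) / (K z * K z)).
Proof.
  intros HN HK HK0.
  apply (is_Cderive_eq _ _ (n * / K z + N z * (k * - / (K z * K z)))); [|field; exact HK0].
  apply (is_Cderive_mult N (fun w => / K w)); [exact HN|].
  apply (is_Cderive_comp (fun y => / y) K); [apply is_Cderive_Cinv, HK0 | exact HK].
Qed.

(** * Continuity and integrals along segments *)

Definition Ccontinuous_at (F : C -> C) (w : C) : Prop :=
  forall eps, (0 < eps)%R -> exists del, (0 < del)%R /\ forall w',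
    (Cmod (w' - w) < del)%R -> (Cmod (F w' - F w) < eps)%R.

Lemma is_Cderive_continuous F z l : is_Cderive F z l -> Ccontinuous_at F z.
Proof.
  intros H eps Heps. destruct (H 1%R Rlt_0_1) as [d [Hd H']].
  set (L := (Cmod l + 1)%R). assert (HL : (0 < L)%R) by (unfold L; pose proof (Cmod_ge_0 l); lra).
  exists (Rmin d (eps / L)). split; [apply Rmin_pos; auto; apply Rdiv_lt_0_compat; auto|].
  intros w Hw. pose proof (Rmin_l d (eps / L)). pose proof (Rmin_r d (eps / L)).
  specialize (H' w ltac:(lra)).
  replace (F w - F z) with ((F w - F z - (w - z) * l) + (w - z) * l) by ring.
  eapply Rle_lt_trans; [apply Cmod_triangle|]. rewrite Cmod_mult.
  apply Rle_lt_trans with (L * Cmod (w - z))%R; [unfold L; nra|].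
  apply Rlt_le_trans with (L * (eps / L))%R; [apply Rmult_lt_compat_l; lra|].
  right. field. lra.
Qed.

Lemma Ccontinuous_const c w : Ccontinuous_at (fun _ => c) w.
Proof.
  intros eps Heps. exists 1%R. split; [lra|]. intros w' _.
  unfold Cminus. rewrite Cplus_opp_r, Cmod_0. exact Heps.
Qed.

Lemma Ccontinuous_plus F G w :
  Ccontinuous_at F w -> Ccontinuous_at G w -> Ccontinuous_at (fun x => F x + G x) w.
Proof.
  intros H1 H2 eps Heps.
  destruct (H1 (eps / 2)%R ltac:(lra)) as [d1 [Hd1 K1]].
  destruct (H2 (eps / 2)%R ltac:(lra)) as [d2 [Hd2 K2]].
  exists (Rmin d1 d2); split; [apply Rmin_pos; auto|]. intros w' Hw.
  pose proof (Rmin_l d1 d2). pose proof (Rmin_r d1 d2).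
  specialize (K1 w' ltac:(lra)). specialize (K2 w' ltac:(lra)).
  replace (F w' + G w' - (F w + G w)) with ((F w' - F w) + (G w' - G w)) by ring.
  eapply Rle_lt_trans; [apply Cmod_triangle | lra].
Qed.

Lemma Ccontinuous_mult F G w :
  Ccontinuous_at F w -> Ccontinuous_at G w -> Ccontinuous_at (fun x => F x * G x) w.
Proof.
  intros H1 H2 eps Heps.
  set (M := (Cmod (F w) + Cmod (G w) + 1)%R).
  assert (HM : (0 < M)%R)
    by (unfold M; pose proof (Cmod_ge_0 (F w)); pose proof (Cmod_ge_0 (G w)); lra).
  set (e := Rmin 1 (eps / (3 * M))).
  assert (He : (0 < e)%R) by (apply Rmin_pos; [lra | apply Rdiv_lt_0_compat; lra]).
  assert (He1 : (e <= 1)%R) by apply Rmin_l.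
  assert (HeM : (e * M <= eps / 3)%R).
  { apply Rle_trans with (eps / (3 * M) * M)%R; [apply Rmult_le_compat_r; [lra | apply Rmin_r]|].
    right. field. lra. }
  destruct (H1 e He) as [d1 [Hd1 K1]]. destruct (H2 e He) as [d2 [Hd2 K2]].
  exists (Rmin d1 d2); split; [apply Rmin_pos; auto|]. intros w' Hw.
  pose proof (Rmin_l d1 d2). pose proof (Rmin_r d1 d2).
  specialize (K1 w' ltac:(lra)). specialize (K2 w' ltac:(lra)).
  replace (F w' * G w' - F w * G w)
    with ((F w' - F w) * (G w' - G w) + (F w' - F w) * G w + F w * (G w' - G w)) by ring.
  eapply Rle_lt_trans; [apply Cmod_triangle|].
  eapply Rle_lt_trans; [apply Rplus_le_compat_r, Cmod_triangle|].
  rewrite !Cmod_mult.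
  pose proof (Cmod_ge_0 (F w' - F w)). pose proof (Cmod_ge_0 (G w' - G w)).
  pose proof (Cmod_ge_0 (F w)). pose proof (Cmod_ge_0 (G w)).
  unfold M in HeM. nra.
Qed.

Lemma Ccontinuous_id w : Ccontinuous_at (fun x => x) w.
Proof. apply (is_Cderive_continuous _ _ 1), is_Cderive_id. Qed.

Lemma Ccontinuous_scal c F w : Ccontinuous_at F w -> Ccontinuous_at (fun x => c * F x) w.
Proof. apply Ccontinuous_mult, Ccontinuous_const. Qed.

Lemma Ccontinuous_minus F G w :
  Ccontinuous_at F w -> Ccontinuous_at G w -> Ccontinuous_at (fun x => F x - G x) w.
Proof.
  intros H1 H2 eps Heps.
  destruct (Ccontinuous_plus F (fun x => -1 * G x) w H1 (Ccontinuous_scal (-1) G w H2) eps Heps)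
    as [d [Hd H]].
  exists d. split; [exact Hd|]. intros w' Hw'.
  replace (F w' - G w' - (F w - G w)) with (F w' + -1 * G w' - (F w + -1 * G w)) by ring.
  auto.
Qed.

Lemma Ccontinuous_affine k l w : Ccontinuous_at (fun x => k + l * x) w.
Proof.
  apply Ccontinuous_plus; [apply Ccontinuous_const | apply Ccontinuous_scal, Ccontinuous_id].
Qed.

Lemma norm_C_R (x : C) : @norm R_AbsRing C_R_NormedModule x = Cmod x.
Proof.
  destruct x as [x1 x2]. unfold norm. simpl. unfold prod_norm, Cmod. simpl.
  change (norm x1) with (Rabs x1). change (norm x2) with (Rabs x2).
  f_equal. rewrite !Rmult_1_r, <- !Rabs_mult, !Rabs_right by nra. ring.
Qed.

Lemma scal_C_R (r : R) (x : C) : @scal R_AbsRing C_R_NormedModule r x = RtoC r * x.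
Proof.
  destruct x as [x1 x2]. unfold scal. simpl. unfold prod_scal, Cmult, RtoC. simpl.
  unfold scal; simpl. unfold mult; simpl. f_equal; ring.
Qed.

Lemma plus_C_R (x y : C) : @plus C_R_NormedModule x y = x + y.
Proof. destruct x, y. reflexivity. Qed.

Lemma minus_C_R (x y : C) : @minus C_R_NormedModule x y = x - y.
Proof. destruct x, y. reflexivity. Qed.

Lemma opp_C_R (x : C) : @opp C_R_NormedModule x = - x.
Proof. destruct x. reflexivity. Qed.

Notation CRInt := (@RInt C_R_CompleteNormedModule).
Notation is_CRInt := (@is_RInt C_R_NormedModule).

Lemma is_RInt_Cmult (phi : R -> C) lo hi J c :
  is_CRInt phi lo hi J -> is_CRInt (fun t => c * phi t) lo hi (c * J).
Proof.
  intros H. destruct c as [c1 c2].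
  assert (H1 := is_RInt_fct_extend_fst (V := R_NormedModule) _ _ _ _ H).
  assert (H2 := is_RInt_fct_extend_snd (V := R_NormedModule) _ _ _ _ H).
  replace ((c1, c2) * J) with ((c1 * fst J + (- c2) * snd J)%R, (c1 * snd J + c2 * fst J)%R)
    by (destruct J; unfold Cmult; simpl; f_equal; ring).
  apply (is_RInt_fct_extend_pair (V := R_NormedModule)).
  - eapply is_RInt_ext;
      [| exact (is_RInt_plus (V := R_NormedModule) _ _ _ _ _ _
                  (is_RInt_scal _ _ _ c1 _ H1) (is_RInt_scal _ _ _ (- c2) _ H2))].
    intros t _. unfold Cmult. simpl. unfold scal, plus. simpl. unfold mult. simpl. ring.
  - eapply is_RInt_ext;
      [| exact (is_RInt_plus (V := R_NormedModule) _ _ _ _ _ _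
                  (is_RInt_scal _ _ _ c1 _ H2) (is_RInt_scal _ _ _ c2 _ H1))].
    intros t _. unfold Cmult. simpl. unfold scal, plus. simpl. unfold mult. simpl. ring.
Qed.

Definition seg_point (a b : C) (t : R) : C := a + RtoC t * (b - a).

Definition segint (F : C -> C) (a b : C) : C :=
  (b - a) * CRInt (fun t => F (seg_point a b t)) 0 1.

Definition Ccont_seg (F : C -> C) (a b : C) : Prop :=
  forall t, (0 <= t <= 1)%R -> Ccontinuous_at F (seg_point a b t).

Lemma seg_point_0 a b : seg_point a b 0 = a.
Proof. unfold seg_point. ring. Qed.

Lemma seg_point_1 a b : seg_point a b 1 = b.
Proof. unfold seg_point. ring. Qed.

Lemma seg_point_sub a b lo hi t :
  seg_point (seg_point a b lo) (seg_point a b hi) t = seg_point a b ((hi - lo) * t + lo).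
Proof. unfold seg_point. rewrite RtoC_plus, RtoC_mult, RtoC_minus. ring. Qed.

Lemma seg_point_minus a b s t :
  seg_point a b s - seg_point a b t = RtoC (s - t) * (b - a).
Proof. unfold seg_point. rewrite RtoC_minus. ring. Qed.

Lemma continuous_seg_point F a b t0 :
  Ccontinuous_at F (seg_point a b t0) ->
  @continuous R_UniformSpace C_R_CompleteNormedModule (fun t => F (seg_point a b t)) t0.
Proof.
  intros H. apply (filterlim_locally (U := C_R_CompleteNormedModule)).
  intros eps. destruct (H eps (cond_pos eps)) as [d [Hd H']].
  set (L := (Cmod (b - a) + 1)%R).
  assert (HL : (0 < L)%R) by (unfold L; pose proof (Cmod_ge_0 (b - a)); lra).
  exists (mkposreal (d / L) (Rdiv_lt_0_compat _ _ Hd HL)).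
  intros t Ht. apply (norm_compat1 (V := C_R_NormedModule)).
  rewrite norm_C_R, minus_C_R. apply H'.
  rewrite seg_point_minus, Cmod_mult, Cmod_R.
  change (Rabs (t - t0) < d / L)%R in Ht.
  pose proof (Cmod_ge_0 (b - a)). pose proof (Rabs_pos (t - t0)).
  apply Rle_lt_trans with (Rabs (t - t0) * L)%R; [unfold L; nra|].
  apply Rlt_le_trans with (d / L * L)%R; [apply Rmult_lt_compat_r; lra|].
  right. field. lra.
Qed.

Lemma ex_RInt_seg F a b lo hi : Ccont_seg F a b ->
  (0 <= lo <= 1)%R -> (0 <= hi <= 1)%R ->
  ex_RInt (V := C_R_CompleteNormedModule) (fun t => F (seg_point a b t)) lo hi.
Proof.
  intros H Hlo Hhi. apply (ex_RInt_continuous (V := C_R_CompleteNormedModule)). intros t Ht.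
  apply continuous_seg_point, H. split.
  - eapply Rle_trans; [|apply Ht]. apply Rmin_case; lra.
  - eapply Rle_trans; [apply Ht|]. apply Rmax_case; lra.
Qed.

Lemma segint_correct F a b : Ccont_seg F a b ->
  is_CRInt (fun t => F (seg_point a b t)) 0 1 (CRInt (fun t => F (seg_point a b t)) 0 1).
Proof.
  intros H. apply (RInt_correct (V := C_R_CompleteNormedModule)), ex_RInt_seg; auto; lra.
Qed.

Lemma Ccont_seg_sub F a b lo hi : Ccont_seg F a b ->
  (0 <= lo <= 1)%R -> (0 <= hi <= 1)%R -> Ccont_seg F (seg_point a b lo) (seg_point a b hi).
Proof. intros H Hlo Hhi t Ht. rewrite seg_point_sub. apply H. split; nra. Qed.

Lemma segint_sub F a b lo hi : Ccont_seg F a b ->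
  (0 <= lo <= 1)%R -> (0 <= hi <= 1)%R ->
  segint F (seg_point a b lo) (seg_point a b hi)
  = (b - a) * CRInt (fun t => F (seg_point a b t)) lo hi.
Proof.
  intros H Hlo Hhi. set (phi := fun t => F (seg_point a b t)).
  assert (Hlin : is_CRInt (fun t => scal (hi - lo)%R (phi ((hi - lo) * t + lo)%R)) 0 1
                   (CRInt phi lo hi)).
  { apply (is_RInt_comp_lin phi (hi - lo) lo 0 1).
    replace ((hi - lo) * 0 + lo)%R with lo by ring.
    replace ((hi - lo) * 1 + lo)%R with hi by ring.
    apply (RInt_correct (V := C_R_CompleteNormedModule)), ex_RInt_seg; auto. }
  apply (is_RInt_unique (V := C_R_CompleteNormedModule)) in Hlin.
  rewrite (RInt_scal (V := C_R_CompleteNormedModule)) in Hlin.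
  2: { eapply (ex_RInt_ext (V := C_R_CompleteNormedModule));
       [| apply (ex_RInt_seg F _ _ 0 1 (Ccont_seg_sub F a b lo hi H Hlo Hhi)); lra].
       intros t _. unfold phi. rewrite seg_point_sub. reflexivity. }
  unfold segint. rewrite seg_point_minus, <- Hlin, scal_C_R.
  replace (CRInt (fun t => F (seg_point (seg_point a b lo) (seg_point a b hi) t)) 0 1)
    with (CRInt (fun t => phi ((hi - lo) * t + lo)%R) 0 1).
  - ring.
  - apply RInt_ext. intros t _. unfold phi. rewrite seg_point_sub. reflexivity.
Qed.

Lemma segint_swap F a b : Ccont_seg F a b -> segint F b a = - segint F a b.
Proof.
  intros H.
  replace (segint F b a) with (segint F (seg_point a b 1) (seg_point a b 0))
    by (rewrite seg_point_0, seg_point_1; reflexivity).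
  rewrite segint_sub by (auto; lra).
  rewrite <- (opp_RInt_swap (V := C_R_CompleteNormedModule)) by (apply ex_RInt_seg; auto; lra).
  rewrite opp_C_R. unfold segint. ring.
Qed.

Lemma segint_split F a b s : Ccont_seg F a b -> (0 <= s <= 1)%R ->
  segint F a b = segint F a (seg_point a b s) + segint F (seg_point a b s) b.
Proof.
  intros H Hs.
  replace (segint F a (seg_point a b s) + segint F (seg_point a b s) b)
    with (segint F (seg_point a b 0) (seg_point a b s)
          + segint F (seg_point a b s) (seg_point a b 1))
    by (rewrite seg_point_0, seg_point_1; reflexivity).
  rewrite !segint_sub by (auto; lra).
  rewrite <- Cmult_plus_distr_l, <- plus_C_R.
  rewrite (RInt_Chasles (V := C_R_CompleteNormedModule)) by (apply ex_RInt_seg; auto; lra).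
  reflexivity.
Qed.

Lemma Ccont_seg_mult F G a b :
  Ccont_seg F a b -> Ccont_seg G a b -> Ccont_seg (fun w => F w * G w) a b.
Proof. intros H1 H2 t Ht. apply Ccontinuous_mult; auto. Qed.

Lemma Ccont_seg_minus F G a b :
  Ccont_seg F a b -> Ccont_seg G a b -> Ccont_seg (fun w => F w - G w) a b.
Proof. intros H1 H2 t Ht. apply Ccontinuous_minus; auto. Qed.

Lemma Ccont_seg_scal c F a b : Ccont_seg F a b -> Ccont_seg (fun w => c * F w) a b.
Proof. intros H t Ht. apply Ccontinuous_scal; auto. Qed.

Lemma Ccont_seg_const c a b : Ccont_seg (fun _ => c) a b.
Proof. intros t _. apply Ccontinuous_const. Qed.

Lemma segint_ext F G a b :
  (forall t, (0 <= t <= 1)%R -> F (seg_point a b t) = G (seg_point a b t)) ->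
  segint F a b = segint G a b.
Proof.
  intros H. unfold segint. f_equal. apply RInt_ext.
  intros t Ht. rewrite Rmin_left, Rmax_right in Ht by lra. apply H. lra.
Qed.

Lemma segint_plus F G a b : Ccont_seg F a b -> Ccont_seg G a b ->
  segint (fun w => F w + G w) a b = segint F a b + segint G a b.
Proof.
  intros H1 H2. unfold segint. rewrite <- Cmult_plus_distr_l, <- plus_C_R.
  rewrite <- (RInt_plus (V := C_R_CompleteNormedModule)) by (apply ex_RInt_seg; auto; lra).
  reflexivity.
Qed.

Lemma segint_scal c F a b : Ccont_seg F a b -> segint (fun w => c * F w) a b = c * segint F a b.
Proof.
  intros H. unfold segint.
  rewrite (is_RInt_unique (V := C_R_CompleteNormedModule) _ _ _ _
             (is_RInt_Cmult _ _ _ _ c (segint_correct F a b H))).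
  ring.
Qed.

Lemma segint_minus F G a b : Ccont_seg F a b -> Ccont_seg G a b ->
  segint (fun w => F w - G w) a b = segint F a b - segint G a b.
Proof.
  intros H1 H2.
  rewrite (segint_ext _ (fun w => F w + (-1) * G w)) by (intros; ring).
  rewrite segint_plus, segint_scal by (auto using Ccont_seg_scal). ring.
Qed.

Lemma segint_const c a b : segint (fun _ => c) a b = (b - a) * c.
Proof.
  unfold segint. rewrite (RInt_const (V := C_R_CompleteNormedModule)), scal_C_R.
  replace (1 - 0)%R with 1%R by ring. ring.
Qed.

Lemma segint_norm_le F a b M : Ccont_seg F a b ->
  (forall t, (0 <= t <= 1)%R -> (Cmod (F (seg_point a b t)) <= M)%R) ->
  (Cmod (segint F a b) <= Cmod (b - a) * M)%R.
Proof.
  intros H HM. unfold segint. rewrite Cmod_mult.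
  apply Rmult_le_compat_l; [apply Cmod_ge_0|].
  rewrite <- norm_C_R. replace M with ((1 - 0) * M)%R by ring.
  apply (norm_RInt_le_const (V := C_R_NormedModule) (fun t => F (seg_point a b t)));
    [lra | | apply segint_correct; auto].
  intros t Ht. rewrite norm_C_R. auto.
Qed.

Lemma is_derive_seg_point G a b t0 l : is_Cderive G (seg_point a b t0) l ->
  is_derive (V := C_R_NormedModule) (fun t => G (seg_point a b t)) t0 ((b - a) * l).
Proof.
  intros H.
  apply (proj2 (is_derive_eps_delta (K := R_AbsRing) (V := C_R_NormedModule)
                  (fun t => G (seg_point a b t)) t0 ((b - a) * l))).
  intros eps Heps.
  set (L := (Cmod (b - a) + 1)%R).
  assert (HL : (0 < L)%R) by (unfold L; pose proof (Cmod_ge_0 (b - a)); lra).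
  destruct (H (eps / L)%R (Rdiv_lt_0_compat _ _ Heps HL)) as [d [Hd H']].
  exists (d / L)%R. split; [apply Rdiv_lt_0_compat; auto|]. intros t Ht.
  change (Rabs (t - t0) < d / L)%R in Ht. change (norm (minus t t0)) with (Rabs (t - t0)).
  rewrite norm_C_R, !minus_C_R, scal_C_R.
  specialize (H' (seg_point a b t)). rewrite seg_point_minus, Cmod_mult, Cmod_R in H'.
  pose proof (Cmod_ge_0 (b - a)). pose proof (Rabs_pos (t - t0)).
  assert (Hlt : (Rabs (t - t0) * Cmod (b - a) < d)%R).
  { apply Rle_lt_trans with (Rabs (t - t0) * L)%R; [unfold L; nra|].
    apply Rlt_le_trans with (d / L * L)%R; [apply Rmult_lt_compat_r; lra|].
    right. field. lra. }
  specialize (H' Hlt). change (t - t0)%R with (t + - t0)%R in *.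
  rewrite Cmult_assoc. eapply Rle_trans; [exact H'|].
  apply Rle_trans with (eps / L * (Rabs (t + - t0) * L))%R.
  - apply Rmult_le_compat_l; [apply Rlt_le, Rdiv_lt_0_compat; lra|].
    apply Rmult_le_compat_l; [lra|]. unfold L. lra.
  - right. field. lra.
Qed.

Lemma segint_ftc G G' a b :
  (forall t, (0 <= t <= 1)%R -> is_Cderive G (seg_point a b t) (G' (seg_point a b t))) ->
  Ccont_seg G' a b -> segint G' a b = G b - G a.
Proof.
  intros HD HC.
  assert (T : is_CRInt (fun t => (b - a) * G' (seg_point a b t)) 0 1 (G b - G a)).
  { replace (G b - G a) with (minus (G (seg_point a b 1)) (G (seg_point a b 0)))
      by (rewrite seg_point_0, seg_point_1; reflexivity).
    apply (is_RInt_derive (V := C_R_CompleteNormedModule) (fun t => G (seg_point a b t)));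
      rewrite Rmin_left, Rmax_right by lra; intros t Ht.
    - apply is_derive_seg_point, HD, Ht.
    - apply (continuous_seg_point (fun w => (b - a) * G' w)), Ccontinuous_scal, HC, Ht. }
  unfold segint. rewrite <- (is_RInt_unique (V := C_R_CompleteNormedModule) _ _ _ _ T).
  symmetry. apply (is_RInt_unique (V := C_R_CompleteNormedModule)).
  apply is_RInt_Cmult, segint_correct, HC.
Qed.

Lemma segint_affine k l a b :
  segint (fun w => k + l * w) a b = (k * b + l * (b * b / 2)) - (k * a + l * (a * a / 2)).
Proof.
  apply (segint_ftc (fun w => k * w + l * (w * w / 2))).
  - intros t _. set (p := seg_point a b t).
    apply (is_Cderive_eq _ _ (k * 1 + l * ((1 * p + p * 1) * / 2 + p * p * 0)));
      [| field; apply C2_nz].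
    apply is_Cderive_plus; apply is_Cderive_scal; [apply is_Cderive_id|].
    apply (is_Cderive_ext (fun w => (w * w) * / 2)); [reflexivity|].
    apply (is_Cderive_mult (fun w => w * w) (fun _ => / 2)); [|apply is_Cderive_const].
    apply (is_Cderive_mult (fun w => w) (fun w => w)); apply is_Cderive_id.
  - intros t _. apply Ccontinuous_affine.
Qed.

Definition triint (F : C -> C) (a b c : C) : C :=
  segint F a b + segint F b c + segint F c a.

Lemma triint_affine k l a b c : triint (fun w => k + l * w) a b c = 0.
Proof. unfold triint. rewrite !segint_affine. ring. Qed.

Lemma triint_minus_affine F k l a b c :
  Ccont_seg F a b -> Ccont_seg F b c -> Ccont_seg F c a ->
  triint (fun w => F w - (k + l * w)) a b c = triint F a b c.
Proof.
  intros Hab Hbc Hca.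
  assert (Haff : forall x y, Ccont_seg (fun w => k + l * w) x y)
    by (intros x y t _; apply Ccontinuous_affine).
  transitivity (triint F a b c - triint (fun w => k + l * w) a b c).
  - unfold triint. rewrite !segint_minus by auto. ring.
  - rewrite triint_affine. ring.
Qed.

(** * Goursat's theorem *)

Definition tri_point (a b c : C) (u : R * R) : C :=
  a + RtoC (fst u) * (b - a) + RtoC (snd u) * (c - a).

Definition in_simplex (u : R * R) : Prop :=
  (0 <= fst u /\ 0 <= snd u /\ fst u + snd u <= 1)%R.

Definition pcomb (u v : R * R) (t : R) : R * R :=
  (fst u + t * (fst v - fst u), snd u + t * (snd v - snd u))%R.

Definition pnear (u v : R * R) (s : R) : Prop :=
  (- s <= fst u - fst v <= s /\ - s <= snd u - snd v <= s)%R.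

Lemma seg_point_tri_point a b c u v t :
  seg_point (tri_point a b c u) (tri_point a b c v) t = tri_point a b c (pcomb u v t).
Proof.
  unfold seg_point, tri_point, pcomb. simpl.
  rewrite !RtoC_plus, !RtoC_mult, !RtoC_minus. ring.
Qed.

Lemma tri_point_vertices a b c :
  tri_point a b c (0, 0)%R = a /\ tri_point a b c (1, 0)%R = b /\ tri_point a b c (0, 1)%R = c.
Proof. unfold tri_point. simpl. repeat split; ring. Qed.

Lemma in_simplex_comb u v t :
  in_simplex u -> in_simplex v -> (0 <= t <= 1)%R -> in_simplex (pcomb u v t).
Proof. destruct u, v. unfold in_simplex, pcomb. simpl. intros. nra. Qed.

Lemma pnear_comb u v w s t :
  pnear u w s -> pnear v w s -> (0 <= t <= 1)%R -> pnear (pcomb u v t) w s.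
Proof. destruct u, v, w. unfold pnear, pcomb. simpl. intros. nra. Qed.

Lemma pnear_trans u v w s1 s2 : pnear u v s1 -> pnear v w s2 -> pnear u w (s1 + s2).
Proof. unfold pnear. intros. lra. Qed.

Lemma pnear_sym u v s : pnear u v s -> pnear v u s.
Proof. unfold pnear. intros. lra. Qed.

Lemma pnear_refl u s : (0 <= s)%R -> pnear u u s.
Proof. unfold pnear. intros. lra. Qed.

Lemma tri_point_near a b c u v s : pnear u v s ->
  (Cmod (tri_point a b c u - tri_point a b c v) <= s * (Cmod (b - a) + Cmod (c - a)))%R.
Proof.
  intros [H1 H2].
  replace (tri_point a b c u - tri_point a b c v)
    with (RtoC (fst u - fst v) * (b - a) + RtoC (snd u - snd v) * (c - a))
    by (unfold tri_point; rewrite !RtoC_minus; ring).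
  eapply Rle_trans; [apply Cmod_triangle|]. rewrite !Cmod_mult, !Cmod_R.
  pose proof (Cmod_ge_0 (b - a)). pose proof (Cmod_ge_0 (c - a)).
  assert (Rabs (fst u - fst v) <= s)%R by (apply Rabs_le; lra).
  assert (Rabs (snd u - snd v) <= s)%R by (apply Rabs_le; lra).
  nra.
Qed.

(* Subtriangles are recorded by their vertices in the coordinates of [tri_point a b c],
   in which the nested sequence of Goursat's argument converges coordinatewise. *)
Record ptri := mkptri { pv1 : R * R; pv2 : R * R; pv3 : R * R }.

Definition ptri_in (T : ptri) : Prop :=
  in_simplex (pv1 T) /\ in_simplex (pv2 T) /\ in_simplex (pv3 T).

Definition ptri_small (T : ptri) (s : R) : Prop :=
  pnear (pv1 T) (pv2 T) s /\ pnear (pv2 T) (pv3 T) s /\ pnear (pv3 T) (pv1 T) s.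

Definition pmid (u v : R * R) : R * R := pcomb u v (/2).

Definition quarter1 (T : ptri) : ptri :=
  mkptri (pv1 T) (pmid (pv1 T) (pv2 T)) (pmid (pv3 T) (pv1 T)).
Definition quarter2 (T : ptri) : ptri :=
  mkptri (pmid (pv1 T) (pv2 T)) (pv2 T) (pmid (pv2 T) (pv3 T)).
Definition quarter3 (T : ptri) : ptri :=
  mkptri (pmid (pv3 T) (pv1 T)) (pmid (pv2 T) (pv3 T)) (pv3 T).
Definition quarter4 (T : ptri) : ptri :=
  mkptri (pmid (pv1 T) (pv2 T)) (pmid (pv2 T) (pv3 T)) (pmid (pv3 T) (pv1 T)).

Definition is_quarter (T T' : ptri) : Prop :=
  T' = quarter1 T \/ T' = quarter2 T \/ T' = quarter3 T \/ T' = quarter4 T.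

Lemma in_simplex_pmid u v : in_simplex u -> in_simplex v -> in_simplex (pmid u v).
Proof. intros. apply in_simplex_comb; auto; lra. Qed.

Lemma quarter_in T T' : ptri_in T -> is_quarter T T' -> ptri_in T'.
Proof.
  intros [H1 [H2 H3]] Q.
  destruct Q as [-> | [-> | [-> | ->]]];
    unfold ptri_in, quarter1, quarter2, quarter3, quarter4; simpl;
    (split; [|split]); auto using in_simplex_pmid.
Qed.

Lemma quarter_small T T' s : ptri_small T s -> is_quarter T T' ->
  ptri_small T' (s / 2) /\ pnear (pv1 T') (pv1 T) (s / 2).
Proof.
  destruct T as [[p1 p2] [q1 q2] [r1 r2]].
  unfold ptri_small, pnear, pmid, pcomb. simpl. intros H Q.
  destruct Q as [-> | [-> | [-> | ->]]]; unfold quarter1, quarter2, quarter3, quarter4;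
    simpl; lra.
Qed.

Section Goursat.

Variables (F : C -> C) (a b c : C).

Hypothesis F_derivable :
  forall u, in_simplex u -> exists l, is_Cderive F (tri_point a b c u) l.

Local Notation P := (tri_point a b c).

Definition ptri_int (T : ptri) : C := triint F (P (pv1 T)) (P (pv2 T)) (P (pv3 T)).

Lemma Ccont_seg_in_simplex u v : in_simplex u -> in_simplex v -> Ccont_seg F (P u) (P v).
Proof.
  intros Hu Hv t Ht. rewrite seg_point_tri_point.
  destruct (F_derivable _ (in_simplex_comb u v t Hu Hv Ht)) as [l Hl].
  exact (is_Cderive_continuous _ _ _ Hl).
Qed.

Lemma ptri_int_quarters T : ptri_in T ->
  ptri_int T = ptri_int (quarter1 T) + ptri_int (quarter2 T)
               + ptri_int (quarter3 T) + ptri_int (quarter4 T).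
Proof.
  destruct T as [p q r]. intros [Hp [Hq Hr]]. simpl in *.
  unfold ptri_int, quarter1, quarter2, quarter3, quarter4, triint. simpl.
  assert (Hpq := in_simplex_pmid p q Hp Hq).
  assert (Hqr := in_simplex_pmid q r Hq Hr).
  assert (Hrp := in_simplex_pmid r p Hr Hp).
  rewrite (segint_swap F (P (pmid p q)) (P (pmid r p))),
          (segint_swap F (P (pmid p q)) (P (pmid q r))),
          (segint_swap F (P (pmid r p)) (P (pmid q r)))
    by (apply Ccont_seg_in_simplex; auto).
  rewrite (segint_split F (P p) (P q) (/2)), (segint_split F (P q) (P r) (/2)),
          (segint_split F (P r) (P p) (/2))
    by (auto using Ccont_seg_in_simplex; lra).
  rewrite !seg_point_tri_point. unfold pmid. ring.
Qed.

Lemma exists_big_quarter T : ptri_in T ->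
  exists T', is_quarter T T' /\ (Cmod (ptri_int T) <= 4 * Cmod (ptri_int T'))%R.
Proof.
  intros HT.
  assert (Hsum : (Cmod (ptri_int T) <= Cmod (ptri_int (quarter1 T)) + Cmod (ptri_int (quarter2 T))
                   + Cmod (ptri_int (quarter3 T)) + Cmod (ptri_int (quarter4 T)))%R).
  { rewrite ptri_int_quarters by exact HT.
    eapply Rle_trans; [apply Cmod_triangle|]. apply Rplus_le_compat_r.
    eapply Rle_trans; [apply Cmod_triangle|]. apply Rplus_le_compat_r.
    apply Cmod_triangle. }
  destruct (Rle_dec (Cmod (ptri_int T)) (4 * Cmod (ptri_int (quarter1 T)))) as [H1|H1];
    [exists (quarter1 T); unfold is_quarter; auto|].
  destruct (Rle_dec (Cmod (ptri_int T)) (4 * Cmod (ptri_int (quarter2 T)))) as [H2|H2];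
    [exists (quarter2 T); unfold is_quarter; auto|].
  destruct (Rle_dec (Cmod (ptri_int T)) (4 * Cmod (ptri_int (quarter3 T)))) as [H3|H3];
    [exists (quarter3 T); unfold is_quarter; auto|].
  exists (quarter4 T). split; [unfold is_quarter; auto | lra].
Qed.

(* Meaningful when [ptri_in T], where [exists_big_quarter] provides the witness. *)
Definition next_quarter (T : ptri) : ptri :=
  epsilon (inhabits T)
    (fun T' => is_quarter T T' /\ (Cmod (ptri_int T) <= 4 * Cmod (ptri_int T'))%R).

Lemma next_quarter_spec T : ptri_in T ->
  is_quarter T (next_quarter T) /\
  (Cmod (ptri_int T) <= 4 * Cmod (ptri_int (next_quarter T)))%R.
Proof. intros HT. unfold next_quarter. apply epsilon_spec, exists_big_quarter, HT. Qed.

Fixpoint nested (n : nat) : ptri :=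
  match n with
  | O => mkptri (0, 0)%R (1, 0)%R (0, 1)%R
  | S n => next_quarter (nested n)
  end.

Lemma nested_spec n :
  ptri_in (nested n) /\ ptri_small (nested n) ((/2) ^ n) /\
  (Cmod (triint F a b c) <= 4 ^ n * Cmod (ptri_int (nested n)))%R.
Proof.
  induction n as [|n [Hin [Hsmall Hbound]]].
  - destruct (tri_point_vertices a b c) as [Ea [Eb Ec]].
    unfold ptri_int. simpl. rewrite Ea, Eb, Ec.
    unfold ptri_in, ptri_small, in_simplex, pnear. simpl. lra.
  - destruct (next_quarter_spec _ Hin) as [Hq Hb]. simpl.
    split; [|split].
    + exact (quarter_in _ _ Hin Hq).
    + replace (/ 2 * (/ 2) ^ n)%R with ((/ 2) ^ n / 2)%R by field.
      exact (proj1 (quarter_small _ _ _ Hsmall Hq)).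
    + pose proof (pow_le 4 n ltac:(lra)). nra.
Qed.

Lemma nested_drift n m : (n <= m)%nat ->
  pnear (pv1 (nested m)) (pv1 (nested n)) ((/2) ^ n - (/2) ^ m).
Proof.
  intros Hnm. induction Hnm; [unfold pnear; lra|].
  destruct (nested_spec m) as [Hin [Hsmall _]].
  destruct (next_quarter_spec _ Hin) as [Hq _].
  destruct (quarter_small _ _ _ Hsmall Hq) as [_ Hp].
  simpl. unfold pnear in *. lra.
Qed.

Lemma nested_limit : exists p, in_simplex p /\ forall n, pnear (pv1 (nested n)) p ((/2) ^ n).
Proof.
  destruct (half_pow_cauchy_limit (fun n => fst (pv1 (nested n)))) as [l1 H1].
  { intros n m Hnm. destruct (nested_drift n m Hnm) as [D _].
    pose proof (half_pow_pos m). apply Rabs_le. lra. }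
  destruct (half_pow_cauchy_limit (fun n => snd (pv1 (nested n)))) as [l2 H2].
  { intros n m Hnm. destruct (nested_drift n m Hnm) as [_ D].
    pose proof (half_pow_pos m). apply Rabs_le. lra. }
  assert (Hnear : forall n, pnear (pv1 (nested n)) (l1, l2) ((/2) ^ n)).
  { intros n. specialize (H1 n). specialize (H2 n).
    apply Rabs_le_between in H1, H2. unfold pnear. simpl. lra. }
  exists (l1, l2). split; [|exact Hnear].
  assert (Hsimplex : forall n, in_simplex (pv1 (nested n))) by (intros n; apply nested_spec).
  unfold in_simplex. simpl. split; [|split].
  - assert (- l1 <= 0)%R; [|lra]. apply le_0_of_le_half_pow. intros n.
    specialize (Hnear n). specialize (Hsimplex n).
    unfold pnear, in_simplex in *. simpl in *. lra.
  - assert (- l2 <= 0)%R; [|lra]. apply le_0_of_le_half_pow. intros n.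
    specialize (Hnear n). specialize (Hsimplex n).
    unfold pnear, in_simplex in *. simpl in *. lra.
  - assert ((l1 + l2 - 1) / 2 <= 0)%R; [|lra]. apply le_0_of_le_half_pow. intros n.
    specialize (Hnear n). specialize (Hsimplex n).
    unfold pnear, in_simplex in *. simpl in *. lra.
Qed.

(* Near a point P p where F is differentiable, F is affine up to o(|w - P p|), and affine
   functions integrate to 0 over triangles: a triangle of size s near p contributes
   o(s^2), which beats the factor 4^n lost in the n-th bisection step. *)
Lemma small_ptri_int_le p l eps del s T :
  (0 <= eps)%R ->
  (forall w, (Cmod (w - P p) < del)%R ->
     (Cmod (F w - F (P p) - (w - P p) * l) <= eps * Cmod (w - P p))%R) ->
  ptri_in T -> ptri_small T s -> pnear (pv1 T) p s ->
  (2 * s * (Cmod (b - a) + Cmod (c - a)) < del)%R ->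
  (Cmod (ptri_int T) <= 6 * eps * (s * (Cmod (b - a) + Cmod (c - a))) ^ 2)%R.
Proof.
  intros Heps Hl [H1 [H2 H3]] [S12 [S23 S31]] Hp Hdel.
  set (S := (Cmod (b - a) + Cmod (c - a))%R) in *.
  assert (HS : (0 <= S)%R)
    by (unfold S; pose proof (Cmod_ge_0 (b - a)); pose proof (Cmod_ge_0 (c - a)); lra).
  assert (Hs : (0 <= s)%R) by (destruct S12; lra).
  set (G := fun w => F w - ((F (P p) - P p * l) + l * w)).
  assert (edge : forall u v, in_simplex u -> in_simplex v ->
            pnear u (pv1 T) s -> pnear v (pv1 T) s -> pnear v u s ->
            (Cmod (segint G (P u) (P v)) <= s * S * (eps * (2 * s * S)))%R).
  { intros u v Hu Hv Hu1 Hv1 Huv.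
    eapply Rle_trans; [apply (segint_norm_le _ _ _ (eps * (2 * s * S)))|].
    - intros t Ht. apply Ccontinuous_minus; [apply Ccont_seg_in_simplex; auto|].
      apply Ccontinuous_affine.
    - intros t Ht. rewrite seg_point_tri_point.
      assert (Hw := tri_point_near a b c _ _ _
                      (pnear_trans _ _ _ _ _ (pnear_comb u v _ s t Hu1 Hv1 Ht) Hp)).
      fold S in Hw. replace ((s + s) * S)%R with (2 * s * S)%R in Hw by ring.
      unfold G. set (w := P (pcomb u v t)) in *.
      replace (F w - (F (P p) - P p * l + l * w)) with (F w - F (P p) - (w - P p) * l) by ring.
      eapply Rle_trans; [apply Hl; lra|]. apply Rmult_le_compat_l; lra.
    - apply Rmult_le_compat_r; [|apply tri_point_near, Huv].
      apply Rmult_le_pos; [lra | apply Rmult_le_pos; lra]. }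
  assert (E : ptri_int T = triint G (P (pv1 T)) (P (pv2 T)) (P (pv3 T))).
  { unfold ptri_int, G. symmetry. apply triint_minus_affine; apply Ccont_seg_in_simplex; auto. }
  rewrite E. unfold triint.
  assert (R11 := pnear_refl (pv1 T) s Hs).
  assert (R21 := pnear_sym _ _ _ S12).
  eapply Rle_trans; [apply Cmod_triangle|].
  eapply Rle_trans; [apply Rplus_le_compat_r, Cmod_triangle|].
  assert (E12 := edge _ _ H1 H2 R11 R21 R21).
  assert (E23 := edge _ _ H2 H3 R21 S31 (pnear_sym _ _ _ S23)).
  assert (E31 := edge _ _ H3 H1 S31 R11 (pnear_sym _ _ _ S31)).
  nra.
Qed.

Theorem goursat : triint F a b c = 0.
Proof.
  destruct nested_limit as [p [Hp Hnear]].
  destruct (F_derivable p Hp) as [l Hl].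
  set (S := (Cmod (b - a) + Cmod (c - a))%R).
  assert (HS : (0 <= S)%R)
    by (unfold S; pose proof (Cmod_ge_0 (b - a)); pose proof (Cmod_ge_0 (c - a)); lra).
  apply Cmod_eq_0, Rle_antisym; [|apply Cmod_ge_0].
  apply (le_0_of_le_eps_mult _ (6 * S ^ 2)); [nra|]. intros eps Heps.
  destruct (Hl eps Heps) as [del [Hdel Hd]].
  destruct (half_pow_lt (del / (2 * S + 1))) as [n Hn]; [apply Rdiv_lt_0_compat; lra|].
  set (s := ((/2) ^ n)%R) in *. assert (Hs := half_pow_pos n). fold s in Hs.
  assert (H2s : (2 * s * S < del)%R).
  { apply Rlt_le_trans with (del / (2 * S + 1) * (2 * S + 1))%R.
    - apply Rle_lt_trans with (s * (2 * S + 1))%R; [nra|].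
      apply Rmult_lt_compat_r; lra.
    - right. field. lra. }
  destruct (nested_spec n) as [Hin [Hsmall Hbound]].
  assert (B := small_ptri_int_le p l eps del s (nested n) ltac:(lra) Hd Hin Hsmall (Hnear n) H2s).
  fold S in B.
  assert (E4 : (4 ^ n * (s * s) = 1)%R).
  { unfold s. rewrite <- !Rpow_mult_distr.
    replace (4 * (/2 * /2))%R with 1%R by field. apply pow1. }
  pose proof (pow_le 4 n ltac:(lra)).
  eapply Rle_trans; [exact Hbound|].
  apply Rle_trans with (4 ^ n * (6 * eps * (s * S) ^ 2))%R; [apply Rmult_le_compat_l; auto|].
  right.
  replace (4 ^ n * (6 * eps * (s * S) ^ 2))%R
    with (4 ^ n * (s * s) * (eps * (6 * S ^ 2)))%R by ring.
  rewrite E4. ring.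
Qed.

End Goursat.

(** * Primitives and the Cauchy formula for triangles *)

Lemma inD_tri_point a b c u : inD a -> inD b -> inD c -> in_simplex u ->
  inD (tri_point a b c u).
Proof.
  unfold inD. intros Ha Hb Hc [H1 [H2 H3]].
  set (m := Rmax (Cmod a) (Rmax (Cmod b) (Cmod c))).
  assert (Hm : (m < 1)%R) by (unfold m; repeat apply Rmax_lub_lt; auto).
  assert (Ma : (Cmod a <= m)%R) by apply Rmax_l.
  assert (Mb : (Cmod b <= m)%R) by (eapply Rle_trans; [apply Rmax_l | apply Rmax_r]).
  assert (Mc : (Cmod c <= m)%R) by (eapply Rle_trans; [apply Rmax_r | apply Rmax_r]).
  replace (tri_point a b c u)
    with (RtoC (1 - fst u - snd u) * a + RtoC (fst u) * b + RtoC (snd u) * c)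
    by (unfold tri_point; rewrite !RtoC_minus; ring).
  eapply Rle_lt_trans; [apply Cmod_triangle|].
  eapply Rle_lt_trans; [apply Rplus_le_compat_r, Cmod_triangle|].
  rewrite !Cmod_mult, !Cmod_R, !Rabs_right by lra.
  nra.
Qed.

Lemma inD_seg_point a b t : inD a -> inD b -> (0 <= t <= 1)%R -> inD (seg_point a b t).
Proof.
  intros Ha Hb Ht.
  replace (seg_point a b t) with (tri_point a b a (t, 0%R))
    by (unfold tri_point, seg_point; simpl; ring).
  apply inD_tri_point; auto. unfold in_simplex. simpl. lra.
Qed.

Lemma inD_0 : inD 0.
Proof. unfold inD. rewrite Cmod_0. lra. Qed.

Lemma inD_near z w : inD z -> (Cmod (w - z) < 1 - Cmod z)%R -> inD w.
Proof.
  unfold inD. intros Hz Hw. assert (T := Cmod_triangle (w - z) z).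
  replace (w - z + z) with w in T by ring. lra.
Qed.

Lemma holoD_is_Cderive F z : holoD F -> inD z -> is_Cderive F z (Cderiv F z).
Proof. intros H Hz. apply Cderiv_correct, H, Hz. Qed.

Lemma holoD_intro F : (forall z, inD z -> exists l, is_Cderive F z l) -> holoD F.
Proof.
  intros H z Hz. destruct (H z Hz) as [l Hl]. exists l. apply is_derive_Cderive, Hl.
Qed.

Lemma holoD_continuous F z : holoD F -> inD z -> Ccontinuous_at F z.
Proof. intros H Hz. exact (is_Cderive_continuous _ _ _ (holoD_is_Cderive F z H Hz)). Qed.

Lemma holoD_Ccont_seg F a b : holoD F -> inD a -> inD b -> Ccont_seg F a b.
Proof. intros H Ha Hb t Ht. apply holoD_continuous; auto. apply inD_seg_point; auto. Qed.

Lemma holoD_triint F a b c : holoD F -> inD a -> inD b -> inD c -> triint F a b c = 0.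
Proof.
  intros H Ha Hb Hc. apply goursat. intros u Hu. exists (Cderiv F (tri_point a b c u)).
  apply holoD_is_Cderive; auto. apply inD_tri_point; auto.
Qed.

Lemma holoD_mult F G : holoD F -> holoD G -> holoD (fun w => F w * G w).
Proof.
  intros HF HG. apply holoD_intro. intros z Hz. eexists.
  apply is_Cderive_mult; apply holoD_is_Cderive; auto.
Qed.

Lemma cint0_segint F z : cint0 F z = segint F 0 z.
Proof.
  unfold cint0, segint. replace (z - 0) with z by ring. f_equal.
  apply RInt_ext. intros t _. f_equal. unfold seg_point. ring.
Qed.

Lemma cint0_0 F : cint0 F 0 = 0.
Proof. unfold cint0. ring. Qed.

Theorem is_Cderive_cint0 F z : holoD F -> inD z -> is_Cderive (cint0 F) z (F z).
Proof.
  intros H Hz eps Heps.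
  destruct (holoD_continuous F z H Hz eps Heps) as [d [Hd Hcont]].
  exists (Rmin d (1 - Cmod z)). split; [apply Rmin_pos; unfold inD in Hz; lra|].
  intros w Hw. pose proof (Rmin_l d (1 - Cmod z)). pose proof (Rmin_r d (1 - Cmod z)).
  assert (Hw' : inD w) by (apply (inD_near z); auto; lra).
  assert (Split : segint F 0 w = segint F 0 z + segint F z w).
  { assert (G := holoD_triint F 0 z w H inD_0 Hz Hw'). unfold triint in G.
    rewrite (segint_swap F 0 w) in G by (apply holoD_Ccont_seg; auto using inD_0).
    transitivity (segint F 0 w + (segint F 0 z + segint F z w + - segint F 0 w));
      [rewrite G | ]; ring. }
  rewrite !cint0_segint, Split.
  replace (segint F 0 z + segint F z w - segint F 0 z - (w - z) * F z)
    with (segint (fun x => F x - F z) z w)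
    by (rewrite segint_minus, segint_const by
          (auto using Ccont_seg_const, holoD_Ccont_seg); ring).
  rewrite Rmult_comm. apply segint_norm_le.
  - intros t Ht. apply Ccontinuous_minus; [|apply Ccontinuous_const].
    apply holoD_continuous; auto. apply inD_seg_point; auto.
  - intros t Ht. apply Rlt_le, Hcont.
    unfold seg_point. replace (z + RtoC t * (w - z) - z) with (RtoC t * (w - z)) by ring.
    rewrite Cmod_mult, Cmod_R, Rabs_right by lra.
    pose proof (Cmod_ge_0 (w - z)). nra.
Qed.

Lemma eq_of_is_Cderive_0 G p :
  (forall w, inD w -> is_Cderive G w 0) -> inD p -> G p = G 0.
Proof.
  intros H Hp.
  assert (E := segint_ftc G (fun _ => 0) 0 p
                 ltac:(intros t Ht; apply H, inD_seg_point; auto using inD_0)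
                 (Ccont_seg_const 0 0 p)).
  rewrite segint_const in E.
  replace (G p) with ((G p - G 0) + G 0) by ring. rewrite <- E. ring.
Qed.

(* The quotient (F w - F z) / (w - z), extended by F'(z) at w = z; the test on [Cmod]
   stands in for a decidable equality on [C]. *)
Definition diff_quot (F : C -> C) (z w : C) : C :=
  if Req_EM_T (Cmod (w - z)) 0 then Cderiv F z else (F w - F z) / (w - z).

Lemma Cmod_minus_neq_0 (w z : C) : w <> z -> Cmod (w - z) <> 0%R.
Proof. intros H E. apply H, Cmod_minus_eq_0, E. Qed.

Lemma diff_quot_continuous_center F z : holoD F -> inD z -> Ccontinuous_at (diff_quot F z) z.
Proof.
  intros H Hz eps Heps.
  destruct (holoD_is_Cderive F z H Hz (eps / 2)%R ltac:(lra)) as [d [Hd Hd']].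
  exists d. split; [exact Hd|]. intros w Hw. unfold diff_quot.
  destruct (Req_EM_T (Cmod (z - z)) 0) as [_|E];
    [| exfalso; apply E; unfold Cminus; rewrite Cplus_opp_r; apply Cmod_0].
  destruct (Req_EM_T (Cmod (w - z)) 0) as [E|E].
  - unfold Cminus. rewrite Cplus_opp_r, Cmod_0. exact Heps.
  - assert (Hwz : w - z <> 0) by (intro X; apply E; rewrite X; apply Cmod_0).
    replace ((F w - F z) / (w - z) - Cderiv F z)
      with ((F w - F z - (w - z) * Cderiv F z) / (w - z)) by (field; auto).
    rewrite Cmod_div by auto.
    assert (P : (0 < Cmod (w - z))%R) by (pose proof (Cmod_ge_0 (w - z)); lra).
    apply (Rmult_lt_reg_r (Cmod (w - z))); auto. unfold Rdiv.
    rewrite Rmult_assoc, Rinv_l, Rmult_1_r by lra.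
    specialize (Hd' w Hw). nra.
Qed.

Lemma diff_quot_derivable F z w : holoD F -> inD w -> w <> z ->
  exists l, is_Cderive (diff_quot F z) w l.
Proof.
  intros H Hw Hwz. eexists.
  apply (is_Cderive_ext_loc (fun x => (F x - F z) * / (x - z))).
  - exists (Cmod (w - z)).
    split; [pose proof (Cmod_ge_0 (w - z)); pose proof (Cmod_minus_neq_0 _ _ Hwz); lra|].
    intros x Hx. unfold diff_quot. destruct (Req_EM_T (Cmod (x - z)) 0) as [E|E]; [|reflexivity].
    apply Cmod_minus_eq_0 in E. subst x. rewrite Cmod_minus_sym in Hx. lra.
  - apply is_Cderive_mult; [| apply is_Cderive_Cinv_shift; exact Hwz].
    apply is_Cderive_minus; [apply holoD_is_Cderive; auto | apply is_Cderive_const].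
Qed.

Lemma diff_quot_continuous F z w : holoD F -> inD z -> inD w -> Ccontinuous_at (diff_quot F z) w.
Proof.
  intros H Hz Hw. destruct (Req_EM_T (Cmod (w - z)) 0) as [E|E].
  - apply Cmod_minus_eq_0 in E. subst w. apply diff_quot_continuous_center; auto.
  - destruct (diff_quot_derivable F z w H Hw) as [l Hl];
      [intro X; apply E; subst; unfold Cminus; rewrite Cplus_opp_r; apply Cmod_0|].
    exact (is_Cderive_continuous _ _ _ Hl).
Qed.

Definition paff (v1 v2 v3 u : R * R) : R * R :=
  (fst v1 + fst u * (fst v2 - fst v1) + snd u * (fst v3 - fst v1),
   snd v1 + fst u * (snd v2 - snd v1) + snd u * (snd v3 - snd v1))%R.

Lemma tri_point_tri_point a b c v1 v2 v3 u :
  tri_point (tri_point a b c v1) (tri_point a b c v2) (tri_point a b c v3) u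
  = tri_point a b c (paff v1 v2 v3 u).
Proof.
  unfold tri_point, paff. simpl. rewrite !RtoC_plus, !RtoC_mult, !RtoC_minus. ring.
Qed.

Lemma Cminus_diag_uniq (x y : C) : x - y = 0 -> x = y.
Proof. intros E. replace x with ((x - y) + y) by ring. rewrite E. ring. Qed.

Section Corner.

Variables (q : C -> C) (z a b : C).

Hypothesis q_continuous : forall u, in_simplex u -> Ccontinuous_at q (tri_point z a b u).

Hypothesis q_derivable : forall u, in_simplex u -> (0 < fst u + snd u)%R ->
  exists l, is_Cderive q (tri_point z a b u) l.

Local Notation Z := (tri_point z a b).

Lemma corner_Ccont_seg v v' : in_simplex v -> in_simplex v' -> Ccont_seg q (Z v) (Z v').
Proof.
  intros Hv Hv' t Ht. rewrite seg_point_tri_point. apply q_continuous, in_simplex_comb; auto.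
Qed.

Lemma corner_goursat v1 v2 v3 :
  (forall u, in_simplex u ->
     in_simplex (paff v1 v2 v3 u) /\ (0 < fst (paff v1 v2 v3 u) + snd (paff v1 v2 v3 u))%R) ->
  triint q (Z v1) (Z v2) (Z v3) = 0.
Proof.
  intros H. apply goursat. intros u Hu. rewrite tri_point_tri_point.
  destruct (H u Hu). apply q_derivable; auto.
Qed.

(* The triangle (z, a, b) is the corner (z, Z(s,0), Z(0,s)) together with the triangles
   (Z(s,0), a, b) and (Z(s,0), b, Z(0,s)), which avoid z; Goursat kills the latter two. *)
Lemma triint_cut_corner s : (0 < s <= 1)%R ->
  triint q (Z (0, 0)%R) (Z (1, 0)%R) (Z (0, 1)%R) = triint q (Z (0, 0)%R) (Z (s, 0)%R) (Z (0, s)%R).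
Proof.
  intros Hs.
  assert (S00 : in_simplex (0, 0)%R) by (unfold in_simplex; simpl; lra).
  assert (S10 : in_simplex (1, 0)%R) by (unfold in_simplex; simpl; lra).
  assert (S01 : in_simplex (0, 1)%R) by (unfold in_simplex; simpl; lra).
  assert (Ss0 : in_simplex (s, 0)%R) by (unfold in_simplex; simpl; lra).
  assert (S0s : in_simplex (0, s)%R) by (unfold in_simplex; simpl; lra).
  assert (Split1 : segint q (Z (0, 0)%R) (Z (1, 0)%R)
                   = segint q (Z (0, 0)%R) (Z (s, 0)%R) + segint q (Z (s, 0)%R) (Z (1, 0)%R)).
  { rewrite (segint_split q _ _ s) by (auto using corner_Ccont_seg; lra).
    rewrite seg_point_tri_point. unfold pcomb. simpl.
    do 3 f_equal; f_equal; ring. }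
  assert (Split2 : segint q (Z (0, 1)%R) (Z (0, 0)%R)
                   = segint q (Z (0, 1)%R) (Z (0, s)%R) + segint q (Z (0, s)%R) (Z (0, 0)%R)).
  { rewrite (segint_split q _ _ (1 - s)) by (auto using corner_Ccont_seg; lra).
    rewrite seg_point_tri_point. unfold pcomb. simpl.
    do 3 f_equal; f_equal; ring. }
  assert (G1 := corner_goursat (s, 0)%R (1, 0)%R (0, 1)%R
                  ltac:(intros u Hu; unfold in_simplex, paff in *; simpl in *; split; nra)).
  assert (G2 := corner_goursat (s, 0)%R (0, 1)%R (0, s)%R
                  ltac:(intros u Hu; unfold in_simplex, paff in *; simpl in *; split; nra)).
  unfold triint in *.
  rewrite (segint_swap q (Z (s, 0)%R) (Z (0, 1)%R)) in G1 by (auto using corner_Ccont_seg).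
  rewrite (segint_swap q (Z (s, 0)%R) (Z (0, s)%R)) in G2 by (auto using corner_Ccont_seg).
  rewrite Split1, Split2. apply Cminus_diag_uniq.
  set (e1 := segint q (Z (s, 0)%R) (Z (1, 0)%R)) in *.
  set (e2 := segint q (Z (1, 0)%R) (Z (0, 1)%R)) in *.
  set (e3 := segint q (Z (s, 0)%R) (Z (0, 1)%R)) in *.
  set (e4 := segint q (Z (0, 1)%R) (Z (0, s)%R)) in *.
  set (e5 := segint q (Z (s, 0)%R) (Z (0, s)%R)) in *.
  transitivity ((e1 + e2 + - e3) + (e3 + e4 + - e5)); [ring|]. rewrite G1, G2. ring.
Qed.

Lemma corner_small_le s del :
  (forall w, (Cmod (w - Z (0, 0)%R) < del)%R -> (Cmod (q w - q (Z (0, 0)%R)) < 1)%R) ->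
  (0 < s <= 1)%R -> (s * (Cmod (a - z) + Cmod (b - z)) < del)%R ->
  (Cmod (triint q (Z (0, 0)%R) (Z (s, 0)%R) (Z (0, s)%R))
   <= 3 * (s * (Cmod (a - z) + Cmod (b - z)) * (Cmod (q (Z (0, 0)%R)) + 1)))%R.
Proof.
  intros Hd Hs HsL.
  set (L := (Cmod (a - z) + Cmod (b - z))%R) in *.
  set (M := (Cmod (q (Z (0, 0)%R)) + 1)%R).
  assert (edge : forall v v', in_simplex v -> in_simplex v' ->
            pnear v (0, 0)%R s -> pnear v' (0, 0)%R s -> pnear v' v s ->
            (Cmod (segint q (Z v) (Z v')) <= s * L * M)%R).
  { intros v v' Hv Hv' Hv0 Hv'0 Hvv'.
    eapply Rle_trans; [apply (segint_norm_le _ _ _ M); auto using corner_Ccont_seg|].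
    - intros t Ht. rewrite seg_point_tri_point.
      assert (Hnear := tri_point_near z a b _ _ _ (pnear_comb v v' _ s t Hv0 Hv'0 Ht)).
      fold L in Hnear. specialize (Hd (Z (pcomb v v' t)) ltac:(lra)).
      assert (T := Cmod_triangle (q (Z (pcomb v v' t)) - q (Z (0, 0)%R)) (q (Z (0, 0)%R))).
      replace (q (Z (pcomb v v' t)) - q (Z (0, 0)%R) + q (Z (0, 0)%R))
        with (q (Z (pcomb v v' t))) in T by ring.
      unfold M. lra.
    - apply Rmult_le_compat_r; [unfold M; pose proof (Cmod_ge_0 (q (Z (0, 0)%R))); lra|].
      apply tri_point_near, Hvv'. }
  assert (H00 : in_simplex (0, 0)%R) by (unfold in_simplex; simpl; lra).
  assert (Hs0 : in_simplex (s, 0)%R) by (unfold in_simplex; simpl; lra).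
  assert (H0s : in_simplex (0, s)%R) by (unfold in_simplex; simpl; lra).
  unfold triint.
  eapply Rle_trans; [apply Cmod_triangle|].
  eapply Rle_trans; [apply Rplus_le_compat_r, Cmod_triangle|].
  assert (X1 := edge _ _ H00 Hs0 ltac:(unfold pnear; simpl; lra)
                  ltac:(unfold pnear; simpl; lra) ltac:(unfold pnear; simpl; lra)).
  assert (X2 := edge _ _ Hs0 H0s ltac:(unfold pnear; simpl; lra)
                  ltac:(unfold pnear; simpl; lra) ltac:(unfold pnear; simpl; lra)).
  assert (X3 := edge _ _ H0s H00 ltac:(unfold pnear; simpl; lra)
                  ltac:(unfold pnear; simpl; lra) ltac:(unfold pnear; simpl; lra)).
  lra.
Qed.

Lemma corner_vanishes : triint q (Z (0, 0)%R) (Z (1, 0)%R) (Z (0, 1)%R) = 0.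
Proof.
  assert (H00 : in_simplex (0, 0)%R) by (unfold in_simplex; simpl; lra).
  destruct (q_continuous _ H00 1%R Rlt_0_1) as [del [Hdel Hd]].
  set (L := (Cmod (a - z) + Cmod (b - z))%R).
  assert (HL : (0 <= L)%R)
    by (unfold L; pose proof (Cmod_ge_0 (a - z)); pose proof (Cmod_ge_0 (b - z)); lra).
  set (M := (Cmod (q (Z (0, 0)%R)) + 1)%R).
  assert (HM : (0 < M)%R) by (unfold M; pose proof (Cmod_ge_0 (q (Z (0, 0)%R))); lra).
  apply Cmod_eq_0, Rle_antisym; [|apply Cmod_ge_0].
  apply (le_0_of_le_eps_mult _ (3 * L * M)); [nra|]. intros eps Heps.
  set (s := (Rmin (Rmin 1 eps) (del / (L + 1)) / 2)%R).
  pose proof (Rmin_l (Rmin 1 eps) (del / (L + 1))).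
  pose proof (Rmin_r (Rmin 1 eps) (del / (L + 1))).
  pose proof (Rmin_l 1 eps). pose proof (Rmin_r 1 eps).
  assert (Hdl : (0 < del / (L + 1))%R) by (apply Rdiv_lt_0_compat; lra).
  assert (Hs : (0 < s)%R).
  { unfold s. pose proof (Rmin_pos _ _ (Rmin_pos 1 eps Rlt_0_1 Heps) Hdl). lra. }
  assert (Hs1 : (s <= 1)%R) by (unfold s; lra).
  assert (Hse : (s <= eps)%R) by (unfold s; lra).
  assert (HsL : (s * L < del)%R).
  { apply Rle_lt_trans with (del / (L + 1) / 2 * (L + 1))%R; [unfold s; nra|].
    replace (del / (L + 1) / 2 * (L + 1))%R with (del / 2)%R by (field; lra). lra. }
  clearbody s.
  rewrite (triint_cut_corner s) by lra.
  eapply Rle_trans; [apply (corner_small_le s del); auto; lra|]. fold L M.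
  replace (3 * (s * L * M))%R with (s * (3 * L * M))%R by ring.
  apply Rmult_le_compat_r; [nra | lra].
Qed.

End Corner.

(* [cross u v > 0] iff v points counterclockwise from u. *)
Definition cross (u v : C) : R := (fst u * snd v - snd u * fst v)%R.

Lemma tri_point_neq_vertex z a b u :
  cross (a - z) (b - z) <> 0%R -> (0 < fst u + snd u)%R -> tri_point z a b u <> z.
Proof.
  intros Hc Hu E. destruct u as [l m]. simpl in Hu.
  assert (E2 : RtoC l * (a - z) + RtoC m * (b - z) = 0).
  { transitivity (tri_point z a b (l, m) - z); [unfold tri_point; simpl; ring|].
    rewrite E. ring. }
  unfold cross in Hc. destruct (a - z) as [A1 A2], (b - z) as [B1 B2]. simpl in Hc.
  unfold RtoC, Cmult, Cplus in E2. simpl in E2. injection E2. intros E4 E3.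
  assert (X1 : (l * A1 + m * B1 = 0)%R) by lra.
  assert (X2 : (l * A2 + m * B2 = 0)%R) by lra.
  assert (L : (l * (A1 * B2 - A2 * B1) = B2 * (l * A1 + m * B1) - B1 * (l * A2 + m * B2))%R)
    by ring.
  assert (M : (m * (A1 * B2 - A2 * B1) = A1 * (l * A2 + m * B2) - A2 * (l * A1 + m * B1))%R)
    by ring.
  rewrite X1, X2, !Rmult_0_r, Rminus_0_r in L, M.
  apply Rmult_integral in L. apply Rmult_integral in M. lra.
Qed.

Definition seg_avoids (X Y z : C) : Prop :=
  forall t, (0 <= t <= 1)%R -> seg_point X Y t <> z.

Lemma Ccont_seg_kernel X Y z : seg_avoids X Y z -> Ccont_seg (fun w => / (w - z)) X Y.
Proof.
  intros H t Ht. exact (is_Cderive_continuous _ _ _ (is_Cderive_Cinv_shift z _ (H t Ht))).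
Qed.

Lemma triint_diff_quot_vertex F z a b : holoD F -> inD z -> inD a -> inD b ->
  cross (a - z) (b - z) <> 0%R -> triint (diff_quot F z) z a b = 0.
Proof.
  intros HF Hz Ha Hb Hc.
  transitivity (triint (diff_quot F z)
                  (tri_point z a b (0, 0)%R) (tri_point z a b (1, 0)%R) (tri_point z a b (0, 1)%R)).
  { destruct (tri_point_vertices z a b) as [Ez [Ea Eb]]. rewrite Ez, Ea, Eb. reflexivity. }
  apply corner_vanishes.
  - intros u Hu. apply diff_quot_continuous; auto. apply inD_tri_point; auto.
  - intros u Hu Hpos. apply diff_quot_derivable; auto.
    + apply inD_tri_point; auto.
    + apply tri_point_neq_vertex; auto.
Qed.

Lemma segint_diff_quot F z X Y : holoD F -> inD z -> inD X -> inD Y -> seg_avoids X Y z ->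
  segint (diff_quot F z) X Y
  = segint (fun w => F w * / (w - z)) X Y - F z * segint (fun w => 1 * / (w - z)) X Y.
Proof.
  intros HF Hz HX HY Hav.
  assert (K := Ccont_seg_kernel X Y z Hav).
  assert (Ccont_seg (fun _ => 1) X Y) by apply Ccont_seg_const.
  rewrite <- segint_scal, <- segint_minus
    by (auto using Ccont_seg_scal, Ccont_seg_mult, holoD_Ccont_seg).
  apply segint_ext. intros t Ht. assert (Hn := Hav t Ht).
  unfold diff_quot. destruct (Req_EM_T (Cmod (seg_point X Y t - z)) 0) as [E|E].
  - exfalso. apply Hn, Cmod_minus_eq_0, E.
  - field. intro X0. apply Hn, Cmod_minus_eq_0. rewrite X0. apply Cmod_0.
Qed.

Definition cauchy_tri (F : C -> C) (a b c z : C) : C :=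
  triint (fun w => F w * / (w - z)) a b c.

Theorem cauchy_triangle F a b c z : holoD F ->
  inD a -> inD b -> inD c -> inD z ->
  cross (a - z) (b - z) <> 0%R -> cross (b - z) (c - z) <> 0%R -> cross (c - z) (a - z) <> 0%R ->
  seg_avoids a b z -> seg_avoids b c z -> seg_avoids c a z ->
  F z * cauchy_tri (fun _ => 1) a b c z = cauchy_tri F a b c z.
Proof.
  intros HF Ha Hb Hc Hz C1 C2 C3 A1 A2 A3.
  assert (Hq : forall X, inD X -> Ccont_seg (diff_quot F z) z X).
  { intros X HX t Ht. apply diff_quot_continuous; auto. apply inD_seg_point; auto. }
  assert (T0 : triint (diff_quot F z) a b c = 0).
  { transitivity (triint (diff_quot F z) z a b + triint (diff_quot F z) z b c
                  + triint (diff_quot F z) z c a).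
    - unfold triint.
      rewrite (segint_swap (diff_quot F z) z a), (segint_swap (diff_quot F z) z b),
              (segint_swap (diff_quot F z) z c) by auto.
      ring.
    - rewrite !triint_diff_quot_vertex by auto. ring. }
  unfold triint in T0. rewrite !segint_diff_quot in T0 by auto.
  apply Cminus_diag_uniq.
  match type of T0 with
    ?L = _ => transitivity (- L); [unfold cauchy_tri, triint; ring | rewrite T0; ring]
  end.
Qed.

(** * Derivatives of holomorphic functions are holomorphic *)

Lemma segint_bounded F X Y : Ccont_seg F X Y ->
  exists M, (0 <= M)%R /\ forall t, (0 <= t <= 1)%R -> (Cmod (F (seg_point X Y t)) <= M)%R.
Proof.
  intros H.
  destruct (ex_RInt_ub (V := C_R_NormedModule) _ _ _
              (ex_RInt_seg F X Y 0 1 H ltac:(lra) ltac:(lra))) as [M HM].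
  rewrite Rmin_left, Rmax_right in HM by lra.
  exists M. split.
  - specialize (HM 0%R ltac:(lra)). rewrite norm_C_R in HM.
    pose proof (Cmod_ge_0 (F (seg_point X Y 0))). lra.
  - intros t Ht. specialize (HM t Ht). rewrite norm_C_R in HM. exact HM.
Qed.

Lemma is_Cderive_segint_param F (K : C -> C -> C) (K1 : C -> C) X Y z d Cst :
  (0 < d)%R -> (0 <= Cst)%R -> Ccont_seg F X Y ->
  (forall z', (Cmod (z' - z) < d)%R -> Ccont_seg (fun w => F w * K z' w) X Y) ->
  Ccont_seg (fun w => F w * K1 w) X Y ->
  (forall z' t, (Cmod (z' - z) < d)%R -> (0 <= t <= 1)%R ->
     (Cmod (K z' (seg_point X Y t) - K z (seg_point X Y t) - (z' - z) * K1 (seg_point X Y t))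
       <= Cst * (Cmod (z' - z) * Cmod (z' - z)))%R) ->
  is_Cderive (fun z' => segint (fun w => F w * K z' w) X Y) z (segint (fun w => F w * K1 w) X Y).
Proof.
  intros Hd HC HF HK HK1 Hrem eps Heps.
  destruct (segint_bounded F X Y HF) as [MF [HMF BF]].
  set (L := (Cmod (Y - X) * MF * Cst + 1)%R).
  assert (HL : (0 < L)%R).
  { unfold L. pose proof (Cmod_ge_0 (Y - X)).
    assert (0 <= Cmod (Y - X) * MF * Cst)%R by (repeat apply Rmult_le_pos; auto). lra. }
  exists (Rmin d (eps / L)). split; [apply Rmin_pos; auto; apply Rdiv_lt_0_compat; auto|].
  intros z' Hz'. pose proof (Rmin_l d (eps / L)). pose proof (Rmin_r d (eps / L)).
  assert (Hzz : (Cmod (z - z) < d)%R) by (unfold Cminus; rewrite Cplus_opp_r, Cmod_0; auto).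
  assert (HKz' := HK z' ltac:(lra)). assert (HKz := HK z Hzz).
  rewrite <- segint_scal, <- !segint_minus
    by (auto using Ccont_seg_scal, Ccont_seg_minus).
  eapply Rle_trans.
  { apply (segint_norm_le _ _ _ (MF * (Cst * (Cmod (z' - z) * Cmod (z' - z))))).
    - auto using Ccont_seg_scal, Ccont_seg_minus.
    - intros t Ht. set (w := seg_point X Y t).
      replace (F w * K z' w - F w * K z w - (z' - z) * (F w * K1 w))
        with (F w * (K z' w - K z w - (z' - z) * K1 w)) by ring.
      rewrite Cmod_mult.
      apply Rmult_le_compat; [apply Cmod_ge_0 | apply Cmod_ge_0 | apply BF, Ht |].
      apply Hrem; [lra | exact Ht]. }
  pose proof (Cmod_ge_0 (z' - z)). pose proof (Cmod_ge_0 (Y - X)).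
  assert (A : (Cmod (z' - z) * L <= eps)%R).
  { apply Rle_trans with (eps / L * L)%R; [apply Rmult_le_compat_r; lra|].
    right. field. lra. }
  replace (Cmod (Y - X) * (MF * (Cst * (Cmod (z' - z) * Cmod (z' - z)))))%R
    with (Cmod (z' - z) * (Cmod (Y - X) * MF * Cst) * Cmod (z' - z))%R by ring.
  apply Rmult_le_compat_r; [lra|].
  apply Rle_trans with (Cmod (z' - z) * L)%R; [|exact A].
  apply Rmult_le_compat_l; [lra | unfold L; lra].
Qed.

Definition seg_dist_ge (X Y z : C) (d : R) : Prop :=
  forall t, (0 <= t <= 1)%R -> (d <= Cmod (seg_point X Y t - z))%R.

Lemma seg_dist_ge_avoids X Y z d : (0 < d)%R -> seg_dist_ge X Y z d -> seg_avoids X Y z.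
Proof.
  intros Hd H t Ht E. specialize (H t Ht). rewrite E in H.
  unfold Cminus in H. rewrite Cplus_opp_r, Cmod_0 in H. lra.
Qed.

Lemma seg_dist_ge_shift X Y z d z' :
  seg_dist_ge X Y z d -> (Cmod (z' - z) < d / 2)%R -> seg_dist_ge X Y z' (d / 2).
Proof.
  intros H Hz t Ht. specialize (H t Ht).
  assert (T := Cmod_triangle (seg_point X Y t - z') (z' - z)).
  replace (seg_point X Y t - z' + (z' - z)) with (seg_point X Y t - z) in T by ring. lra.
Qed.

Lemma Cmod_Cinv_le (A : C) (d : R) : (0 < d)%R -> (d <= Cmod A)%R -> (Cmod (/ A) <= / d)%R.
Proof.
  intros Hd HA. assert (A <> 0) by (intro E; rewrite E, Cmod_0 in HA; lra).
  rewrite Cmod_inv by auto. apply Rinv_le_contravar; auto.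
Qed.

Lemma Cinv_remainder (A B : C) (d : R) :
  (0 < d)%R -> (d <= Cmod A)%R -> (d / 2 <= Cmod B)%R ->
  (Cmod (/ B - / A - (A - B) * (/ A * / A))
   <= 2 / (d * d * d) * (Cmod (A - B) * Cmod (A - B)))%R.
Proof.
  intros Hd HA HB.
  assert (A <> 0) by (intro E; rewrite E, Cmod_0 in HA; lra).
  assert (B <> 0) by (intro E; rewrite E, Cmod_0 in HB; lra).
  replace (/ B - / A - (A - B) * (/ A * / A)) with ((A - B) * (A - B) * (/ A * / A * / B))
    by (field; auto).
  rewrite !Cmod_mult.
  assert (IA := Cmod_Cinv_le A d Hd HA). assert (IB := Cmod_Cinv_le B (d / 2) ltac:(lra) HB).
  pose proof (Cmod_ge_0 (/ A)). pose proof (Cmod_ge_0 (/ B)). pose proof (Cmod_ge_0 (A - B)).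
  assert (P : (Cmod (/ A) * Cmod (/ A) * Cmod (/ B) <= / d * / d * / (d / 2))%R).
  { apply Rmult_le_compat; auto; [apply Rmult_le_pos; auto|]. apply Rmult_le_compat; auto. }
  replace (/ d * / d * / (d / 2))%R with (2 / (d * d * d))%R in P by (field; lra).
  rewrite (Rmult_comm (2 / (d * d * d))). apply Rmult_le_compat_l; auto.
  apply Rmult_le_pos; auto.
Qed.

Lemma Cinv_sqr_remainder (A B : C) (d : R) :
  (0 < d)%R -> (d <= Cmod A)%R -> (d / 2 <= Cmod B)%R ->
  (Cmod (/ B * / B - / A * / A - (A - B) * (2 * / A * / A * / A))
   <= 8 / (d * d * d * d) * (Cmod (A - B) * Cmod (A - B)))%R.
Proof.
  intros Hd HA HB.
  assert (A <> 0) by (intro E; rewrite E, Cmod_0 in HA; lra).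
  assert (B <> 0) by (intro E; rewrite E, Cmod_0 in HB; lra).
  replace (/ B * / B - / A * / A - (A - B) * (2 * / A * / A * / A))
    with ((A - B) * (A - B) * (/ A * / A * / B * / B + 2 * (/ A * / A * / A * / B)))
    by (field; auto).
  rewrite Cmod_mult, (Rmult_comm (8 / (d * d * d * d))).
  apply Rmult_le_compat; [apply Cmod_ge_0 | apply Cmod_ge_0 | rewrite Cmod_mult; lra |].
  assert (IA := Cmod_Cinv_le A d Hd HA). assert (IB := Cmod_Cinv_le B (d / 2) ltac:(lra) HB).
  pose proof (Cmod_ge_0 (/ A)). pose proof (Cmod_ge_0 (/ B)).
  eapply Rle_trans; [apply Cmod_triangle|]. rewrite !Cmod_mult, Cmod_R, Rabs_right by lra.
  assert (P1 : (Cmod (/ A) * Cmod (/ A) * Cmod (/ B) * Cmod (/ B)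
                <= / d * / d * / (d / 2) * / (d / 2))%R).
  { repeat apply Rmult_le_compat; auto; repeat apply Rmult_le_pos; auto. }
  assert (P2 : (Cmod (/ A) * Cmod (/ A) * Cmod (/ A) * Cmod (/ B)
                <= / d * / d * / d * / (d / 2))%R).
  { repeat apply Rmult_le_compat; auto; repeat apply Rmult_le_pos; auto. }
  replace (8 / (d * d * d * d))%R
    with (/ d * / d * / (d / 2) * / (d / 2) + 2 * (/ d * / d * / d * / (d / 2)))%R
    by (field; lra).
  lra.
Qed.

Section Kernels.

Variables (F : C -> C) (X Y z : C) (d : R).

Hypotheses (d_pos : (0 < d)%R) (F_cont : Ccont_seg F X Y) (X_Y_far : seg_dist_ge X Y z d).

Lemma seg_avoids_near z' : (Cmod (z' - z) < d / 2)%R -> seg_avoids X Y z'.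
Proof.
  intros Hz'. apply (seg_dist_ge_avoids _ _ _ (d / 2)); [lra|].
  apply (seg_dist_ge_shift _ _ z); auto.
Qed.

Lemma is_Cderive_segint_kernel :
  is_Cderive (fun z' => segint (fun w => F w * / (w - z')) X Y) z
             (segint (fun w => F w * (/ (w - z) * / (w - z))) X Y).
Proof.
  assert (Hav := seg_dist_ge_avoids _ _ _ _ d_pos X_Y_far).
  apply (is_Cderive_segint_param F (fun z' w => / (w - z')) _ X Y z (d / 2) (2 / (d * d * d)));
    auto.
  - lra.
  - apply Rlt_le, Rdiv_lt_0_compat; [lra|]. repeat apply Rmult_lt_0_compat; lra.
  - intros z' Hz'. apply Ccont_seg_mult; [exact F_cont|].
    apply Ccont_seg_kernel, seg_avoids_near, Hz'.
  - apply Ccont_seg_mult; [exact F_cont|]. apply Ccont_seg_mult; apply Ccont_seg_kernel; auto.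
  - intros z' t Hz' Ht.
    replace (z' - z) with ((seg_point X Y t - z) - (seg_point X Y t - z')) by ring.
    apply Cinv_remainder; auto. apply (seg_dist_ge_shift _ _ z); auto.
Qed.

Lemma is_Cderive_segint_kernel_sqr :
  is_Cderive (fun z' => segint (fun w => F w * (/ (w - z') * / (w - z'))) X Y) z
             (segint (fun w => F w * (2 * / (w - z) * / (w - z) * / (w - z))) X Y).
Proof.
  assert (Hav := seg_dist_ge_avoids _ _ _ _ d_pos X_Y_far).
  apply (is_Cderive_segint_param F (fun z' w => / (w - z') * / (w - z')) _ X Y z (d / 2)
           (8 / (d * d * d * d))); auto.
  - lra.
  - apply Rlt_le, Rdiv_lt_0_compat; [lra|]. repeat apply Rmult_lt_0_compat; lra.
  - intros z' Hz'. apply Ccont_seg_mult; [exact F_cont|].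
    apply Ccont_seg_mult; apply Ccont_seg_kernel, seg_avoids_near, Hz'.
  - apply Ccont_seg_mult; [exact F_cont|].
    repeat apply Ccont_seg_mult; try apply Ccont_seg_const; apply Ccont_seg_kernel; auto.
  - intros z' t Hz' Ht.
    replace (z' - z) with ((seg_point X Y t - z) - (seg_point X Y t - z')) by ring.
    apply Cinv_sqr_remainder; auto. apply (seg_dist_ge_shift _ _ z); auto.
Qed.

End Kernels.

Lemma segint_kernel_sqr_const X Y z d : (0 < d)%R -> seg_dist_ge X Y z d ->
  segint (fun w => 1 * (/ (w - z) * / (w - z))) X Y = - / (Y - z) - - / (X - z).
Proof.
  intros Hd H. assert (Hav := seg_dist_ge_avoids _ _ _ _ Hd H).
  apply (segint_ftc (fun w => - / (w - z))).
  - intros t Ht. assert (Hn := Hav t Ht).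
    apply (is_Cderive_eq _ _ (- 1 * (- / ((seg_point X Y t - z) * (seg_point X Y t - z))))).
    + apply (is_Cderive_ext (fun w => (- 1) * / (w - z))); [intros; ring|].
      apply is_Cderive_scal, is_Cderive_Cinv_shift, Hn.
    + field. intro E. apply Hn, Cmod_minus_eq_0. rewrite E. apply Cmod_0.
  - apply Ccont_seg_mult; [apply Ccont_seg_const|].
    apply Ccont_seg_mult; apply Ccont_seg_kernel; auto.
Qed.

Lemma Im_Cmult_Cinv (D v : C) : v <> 0 ->
  Im (D * (1 * / v)) = (cross v D / Cmod v ^ 2)%R.
Proof.
  intros Hv. rewrite Cmod2_alt.
  assert (Hn : (Re v ^ 2 + Im v ^ 2 <> 0)%R).
  { rewrite <- Cmod2_alt. apply pow_nonzero. intro E. apply Hv, Cmod_eq_0, E. }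
  destruct D as [D1 D2], v as [v1 v2]. unfold cross, Cinv, Cmult, Re, Im in *. simpl in *.
  rewrite !Rmult_1_r in Hn. field. exact Hn.
Qed.

(* Along the segment, Im ((Y - X) / (w - z)) = cross (X - z) (Y - X) / |w - z|^2 keeps
   a sign; this shows the winding integral is nonzero without computing it (it is 2 pi i). *)
Lemma Im_segint_kernel_pos X Y z d : (0 < d)%R -> seg_dist_ge X Y z d ->
  (0 < cross (X - z) (Y - z))%R -> (0 < Im (segint (fun w => 1 * / (w - z))%C X Y))%R.
Proof.
  intros Hd H Hc.
  replace (cross (X - z) (Y - z)) with (cross (X - z) (Y - X)) in Hc
    by (unfold cross; destruct X, Y, z; simpl; ring).
  assert (Hav := seg_dist_ge_avoids _ _ _ _ Hd H).
  assert (Hcont : Ccont_seg (fun w => 1 * / (w - z)) X Y)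
    by (apply Ccont_seg_mult; [apply Ccont_seg_const | apply Ccont_seg_kernel; auto]).
  assert (I := is_RInt_fct_extend_snd (V := R_NormedModule) _ _ _ _
                 (is_RInt_Cmult _ _ _ _ (Y - X) (segint_correct _ _ _ Hcont))).
  fold (segint (fun w => 1 * / (w - z)) X Y) in I.
  set (R2 := ((Cmod (X - z) + Cmod (Y - X)) ^ 2)%R).
  assert (HR2 : (0 < R2)%R).
  { unfold R2. specialize (H 0%R ltac:(lra)). rewrite seg_point_0 in H.
    pose proof (Cmod_ge_0 (Y - X)). apply pow_lt. lra. }
  apply Rlt_le_trans with (cross (X - z) (Y - X) / R2)%R; [apply Rdiv_lt_0_compat; auto|].
  replace (cross (X - z) (Y - X) / R2)%R with ((1 - 0) * (cross (X - z) (Y - X) / R2))%R by ring.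
  apply (is_RInt_le (fun _ => cross (X - z) (Y - X) / R2)%R _ 0 1 _ _ ltac:(lra)
           (is_RInt_const (V := R_NormedModule) _ _ _) I).
  intros t Ht. change (snd ?x) with (Im x).
  assert (Hv : seg_point X Y t - z <> 0).
  { intro E. apply (Hav t ltac:(lra)), Cmod_minus_eq_0. rewrite E. apply Cmod_0. }

  rewrite Im_Cmult_Cinv by exact Hv.
  replace (cross (seg_point X Y t - z) (Y - X)) with (cross (X - z) (Y - X))
    by (unfold cross, seg_point; destruct X, Y, z; simpl; ring).
  assert (Pos : (0 < Cmod (seg_point X Y t - z))%R) by (apply Cmod_gt_0; exact Hv).
  apply Rmult_le_compat_l; [lra|].
  apply Rinv_le_contravar; [apply pow_lt; auto|]. unfold R2. apply pow_incr. split; [lra|].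
  replace (seg_point X Y t - z) with ((X - z) + RtoC t * (Y - X)) by (unfold seg_point; ring).
  eapply Rle_trans; [apply Cmod_triangle|]. rewrite Cmod_mult, Cmod_R, Rabs_right by lra.
  pose proof (Cmod_ge_0 (Y - X)). nra.
Qed.

Lemma cauchy_tri_1_neq_0 a b c z d : (0 < d)%R ->
  seg_dist_ge a b z d -> seg_dist_ge b c z d -> seg_dist_ge c a z d ->
  (0 < cross (a - z) (b - z))%R -> (0 < cross (b - z) (c - z))%R -> (0 < cross (c - z) (a - z))%R ->
  cauchy_tri (fun _ => 1) a b c z <> 0.
Proof.
  intros Hd E1 E2 E3 K1 K2 K3 E.
  assert (S := f_equal Im E). unfold cauchy_tri, triint in S.
  rewrite !im_plus in S. replace (Im 0) with 0%R in S by reflexivity.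
  assert (P1 := Im_segint_kernel_pos a b z d Hd E1 K1).
  assert (P2 := Im_segint_kernel_pos b c z d Hd E2 K2).
  assert (P3 := Im_segint_kernel_pos c a z d Hd E3 K3). lra.
Qed.

Definition cauchy_tri2 (F : C -> C) (a b c z : C) : C :=
  triint (fun w => F w * (/ (w - z) * / (w - z))) a b c.

Definition cauchy_tri3 (F : C -> C) (a b c z : C) : C :=
  triint (fun w => F w * (2 * / (w - z) * / (w - z) * / (w - z))) a b c.

Section Cauchy_tri_derivatives.

Variables (F : C -> C) (a b c z : C) (d : R).

Hypotheses (d_pos : (0 < d)%R)
  (F_ab : Ccont_seg F a b) (F_bc : Ccont_seg F b c) (F_ca : Ccont_seg F c a)
  (ab_far : seg_dist_ge a b z d) (bc_far : seg_dist_ge b c z d) (ca_far : seg_dist_ge c a z d).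

Lemma is_Cderive_cauchy_tri : is_Cderive (cauchy_tri F a b c) z (cauchy_tri2 F a b c z).
Proof.
  unfold cauchy_tri, cauchy_tri2, triint.
  apply (is_Cderive_plus (fun z' => segint (fun w => F w * / (w - z')) a b
                                    + segint (fun w => F w * / (w - z')) b c)
                         (fun z' => segint (fun w => F w * / (w - z')) c a)).
  apply (is_Cderive_plus (fun z' => segint (fun w => F w * / (w - z')) a b)
                         (fun z' => segint (fun w => F w * / (w - z')) b c)).
  all: apply (is_Cderive_segint_kernel F _ _ z d); auto.
Qed.

Lemma is_Cderive_cauchy_tri2 : is_Cderive (cauchy_tri2 F a b c) z (cauchy_tri3 F a b c z).
Proof.
  unfold cauchy_tri2, cauchy_tri3, triint.
  apply (is_Cderive_plus
           (fun z' => segint (fun w => F w * (/ (w - z') * / (w - z'))) a b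
                      + segint (fun w => F w * (/ (w - z') * / (w - z'))) b c)
           (fun z' => segint (fun w => F w * (/ (w - z') * / (w - z'))) c a)).
  apply (is_Cderive_plus (fun z' => segint (fun w => F w * (/ (w - z') * / (w - z'))) a b)
                         (fun z' => segint (fun w => F w * (/ (w - z') * / (w - z'))) b c)).
  all: apply (is_Cderive_segint_kernel_sqr F _ _ z d); auto.
Qed.

End Cauchy_tri_derivatives.

Lemma cauchy_tri2_1 a b c z d : (0 < d)%R ->
  seg_dist_ge a b z d -> seg_dist_ge b c z d -> seg_dist_ge c a z d ->
  cauchy_tri2 (fun _ => 1) a b c z = 0.
Proof.
  intros Hd E1 E2 E3. unfold cauchy_tri2, triint.
  rewrite (segint_kernel_sqr_const a b z d), (segint_kernel_sqr_const b c z d),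
          (segint_kernel_sqr_const c a z d) by auto.
  ring.
Qed.

Lemma Cmod_ge_coord (w : C) (d : R) :
  (d <= Rabs (fst w) \/ d <= Rabs (snd w))%R -> (d <= Cmod w)%R.
Proof.
  pose proof (Rmax_Cmod w). pose proof (Rmax_l (Rabs (fst w)) (Rabs (snd w))).
  pose proof (Rmax_r (Rabs (fst w)) (Rabs (snd w))). intros [Hd|Hd]; lra.
Qed.

Lemma Cmod_shift_le (z : C) (x y : R) :
  (Cmod (z + (x, y)) <= Cmod z + Rabs x + Rabs y)%R.
Proof.
  eapply Rle_trans; [apply Cmod_triangle|]. pose proof (Cmod_le_Rabs_sum x y). lra.
Qed.

Definition inside_tri (a b c : C) (rho : R) (z : C) : Prop :=
  inD z /\
  (0 < cross (a - z) (b - z))%R /\ (0 < cross (b - z) (c - z))%R /\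
  (0 < cross (c - z) (a - z))%R /\
  seg_dist_ge a b z rho /\ seg_dist_ge b c z rho /\ seg_dist_ge c a z rho.

(* The triangle with vertices z0 + r(-1,-1), z0 + r(1,-1), z0 + r(0,1), where
   r = (1 - |z0|) / 4, and rho = r / 6. *)
Lemma enclosing_triangle z0 : inD z0 ->
  exists a b c rho, (0 < rho)%R /\ inD a /\ inD b /\ inD c /\
    forall z, (Cmod (z - z0) < rho)%R -> inside_tri a b c rho z.
Proof.
  unfold inD. intros Hz0. set (r := ((1 - Cmod z0) / 4)%R).
  assert (Hr : (0 < r)%R) by (unfold r; lra).
  exists (z0 + ((- r)%R, (- r)%R)), (z0 + (r, (- r)%R)), (z0 + (0%R, r)), (r / 6)%R.
  pose proof (Cmod_shift_le z0 (- r) (- r)). pose proof (Cmod_shift_le z0 r (- r)).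
  pose proof (Cmod_shift_le z0 0 r).
  assert (Rabs (- r) = r) by (rewrite Rabs_Ropp; apply Rabs_right; lra).
  assert (Rabs r = r) by (apply Rabs_right; lra). pose proof Rabs_R0.
  split; [lra|]. split; [unfold r in *; lra|]. split; [unfold r in *; lra|].
  split; [unfold r in *; lra|].
  intros z Hz. unfold inside_tri.
  split; [apply (inD_near z0); unfold inD; auto; unfold r in *; lra|].
  pose proof (re_le_Cmod (z - z0)) as Hre. pose proof (Rmax_Cmod (z - z0)) as Him.
  pose proof (Rmax_r (Rabs (fst (z - z0))) (Rabs (snd (z - z0)))).
  destruct z0 as [p q], z as [u v]. unfold Re in Hre. simpl in *.
  assert (Hu : (Rabs (u + - p) < r / 6)%R) by lra.
  assert (Hv : (Rabs (v + - q) < r / 6)%R) by lra.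
  apply Rabs_def2 in Hu, Hv.
  unfold cross. simpl. split; [nra|]. split; [nra|]. split; [nra|].
  split; [|split]; intros t Ht; apply Cmod_ge_coord; unfold seg_point; simpl.
  - right. rewrite Rabs_left1 by nra. nra.
  - destruct (Rle_dec t (2 / 3)) as [T|T].
    + left. rewrite Rabs_right by nra. nra.
    + right. rewrite Rabs_right by nra. nra.
  - destruct (Rle_dec t (1 / 3)) as [T|T].
    + right. rewrite Rabs_right by nra. nra.
    + left. rewrite Rabs_left1 by nra. nra.
Qed.

Lemma cauchy_tri_local F a b c rho z : holoD F -> inD a -> inD b -> inD c -> (0 < rho)%R ->
  inside_tri a b c rho z ->
  cauchy_tri (fun _ => 1) a b c z <> 0 /\
  F z = cauchy_tri F a b c z / cauchy_tri (fun _ => 1) a b c z /\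
  is_Cderive (cauchy_tri (fun _ => 1) a b c) z 0 /\
  is_Cderive (cauchy_tri F a b c) z (cauchy_tri2 F a b c z) /\
  is_Cderive (cauchy_tri2 F a b c) z (cauchy_tri3 F a b c z).
Proof.
  intros HF Ha Hb Hc Hrho [Hz [C1 [C2 [C3 [E1 [E2 E3]]]]]].
  assert (Fab := holoD_Ccont_seg F a b HF Ha Hb).
  assert (Fbc := holoD_Ccont_seg F b c HF Hb Hc).
  assert (Fca := holoD_Ccont_seg F c a HF Hc Ha).
  assert (One : forall x y, Ccont_seg (fun _ => 1) x y) by (intros; apply Ccont_seg_const).
  assert (A1 := seg_dist_ge_avoids _ _ _ _ Hrho E1).
  assert (A2 := seg_dist_ge_avoids _ _ _ _ Hrho E2).
  assert (A3 := seg_dist_ge_avoids _ _ _ _ Hrho E3).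
  assert (HK : cauchy_tri (fun _ => 1) a b c z <> 0)
    by (apply (cauchy_tri_1_neq_0 a b c z rho); auto).
  split; [exact HK|]. split; [|split; [|split]].
  - rewrite <- (cauchy_triangle F a b c z) by (auto; lra). field. exact HK.
  - rewrite <- (cauchy_tri2_1 a b c z rho) by auto.
    apply (is_Cderive_cauchy_tri _ _ _ _ _ rho); auto.
  - apply (is_Cderive_cauchy_tri _ _ _ _ _ rho); auto.
  - apply (is_Cderive_cauchy_tri2 _ _ _ _ _ rho); auto.
Qed.

(* Near z0, F = N / K with N and K Cauchy integrals over a fixed triangle and K' = 0,
   so F' = N' / K, and N' is differentiable again. *)
Theorem holoD_Cderiv F : holoD F -> holoD (Cderiv F).
Proof.
  intros HF. apply holoD_intro. intros z0 Hz0.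
  destruct (enclosing_triangle z0 Hz0) as [a [b [c [rho [Hrho [Ha [Hb [Hc Hinside]]]]]]]].
  set (K := cauchy_tri (fun _ => 1) a b c).
  assert (Local := fun z Hz => cauchy_tri_local F a b c rho z HF Ha Hb Hc Hrho (Hinside z Hz)).
  assert (Der : forall z, (Cmod (z - z0) < rho)%R -> Cderiv F z = cauchy_tri2 F a b c z / K z).
  { intros z Hz. destruct (Local z Hz) as [HK [_ [DK [DN _]]]].
    apply is_Cderive_Cderiv.
    apply (is_Cderive_eq _ _
             ((cauchy_tri2 F a b c z * K z - cauchy_tri F a b c z * 0) / (K z * K z)));
      [| field; exact HK].
    apply (is_Cderive_ext_loc (fun w => cauchy_tri F a b c w / K w) F z);
      [| exact (is_Cderive_div _ _ _ _ _ DN DK HK)].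
    exists (rho - Cmod (z - z0))%R. split; [lra|]. intros w Hw.
    assert (T := Cmod_triangle (w - z) (z - z0)).
    replace (w - z + (z - z0)) with (w - z0) in T by ring.
    symmetry. apply (Local w ltac:(lra)). }
  assert (H0 : (Cmod (z0 - z0) < rho)%R) by (unfold Cminus; rewrite Cplus_opp_r, Cmod_0; lra).
  destruct (Local z0 H0) as [HK0 [_ [DK0 [_ DN0]]]].
  eexists. apply (is_Cderive_ext_loc (fun w => cauchy_tri2 F a b c w / K w) (Cderiv F) z0);
    [| exact (is_Cderive_div _ _ _ _ _ DN0 DK0 HK0)].
  exists rho. split; [exact Hrho|]. intros w Hw. symmetry. apply Der, Hw.
Qed.

(** * The operator identity *)

Lemma eq_of_same_Cderive P Q dP z :
  (forall w, inD w -> is_Cderive P w (dP w)) -> (forall w, inD w -> is_Cderive Q w (dP w)) ->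
  P 0 = Q 0 -> inD z -> P z = Q z.
Proof.
  intros HP HQ H0 Hz. apply Cminus_diag_uniq.
  rewrite (eq_of_is_Cderive_0 (fun w => P w - Q w) z); [rewrite H0; ring | | exact Hz].
  intros w Hw. apply (is_Cderive_eq _ _ (dP w - dP w)); [|ring].
  apply is_Cderive_minus; auto.
Qed.

Lemma cint0_ext F G z : (forall w, inD w -> F w = G w) -> inD z -> cint0 F z = cint0 G z.
Proof.
  intros H Hz. rewrite !cint0_segint. apply segint_ext. intros t Ht.
  apply H, inD_seg_point; auto using inD_0.
Qed.

Lemma cint0_lincomb c1 c2 F1 F2 z : holoD F1 -> holoD F2 -> inD z ->
  c1 * cint0 F1 z + c2 * cint0 F2 z = cint0 (fun w => c1 * F1 w + c2 * F2 w) z.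
Proof.
  intros H1 H2 Hz. rewrite !cint0_segint.
  rewrite segint_plus, !segint_scal by (auto using Ccont_seg_scal, holoD_Ccont_seg, inD_0).
  reflexivity.
Qed.

Lemma holoD_Cderiv_mult F u : holoD F -> holoD u -> holoD (fun w => F w * Cderiv u w).
Proof. intros HF Hu. apply holoD_mult; [exact HF | apply holoD_Cderiv, Hu]. Qed.

Lemma is_Cderive_Top u f z : holoD u -> holoD f -> inD z ->
  is_Cderive (Top u f) z (f z * Cderiv u z).
Proof.
  intros Hu Hf Hz. apply (is_Cderive_cint0 (fun w => f w * Cderiv u w));
    [apply holoD_Cderiv_mult |]; auto.
Qed.

Lemma holoD_Top u f : holoD u -> holoD f -> holoD (Top u f).
Proof. intros Hu Hf. apply holoD_intro. intros z Hz. eexists. apply is_Cderive_Top; auto. Qed.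

Lemma holoD_Mop u f : holoD u -> holoD f -> holoD (Mop u f).
Proof. apply holoD_mult. Qed.

Lemma Top_0 u f : Top u f 0 = 0.
Proof. apply cint0_0. Qed.

Lemma Sop_Top u v f z : holoD u -> holoD v -> holoD f -> inD z ->
  Sop u (Top v f) z = cint0 (fun w => f w * Cderiv v w * u w) z.
Proof.
  intros Hu Hv Hf Hz. apply cint0_ext; [|exact Hz]. intros w Hw.
  rewrite (is_Cderive_Cderiv _ _ _ (is_Cderive_Top v f w Hv Hf Hw)). reflexivity.
Qed.

Lemma Top_lincomb c1 c2 u F1 F2 z : holoD u -> holoD F1 -> holoD F2 -> inD z ->
  c1 * Top u F1 z + c2 * Top u F2 z = Top u (fun w => c1 * F1 w + c2 * F2 w) z.
Proof.
  intros Hu H1 H2 Hz. unfold Top. rewrite cint0_lincomb by (auto using holoD_Cderiv_mult).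
  apply cint0_ext; [|exact Hz]. intros w _. ring.
Qed.

Lemma cpow_plus h a b w : cpow h a w * cpow h b w = cpow h (a + b) w.
Proof. unfold cpow. rewrite <- Cexp_plus, RtoC_plus. f_equal. ring. Qed.

Lemma cpow_ext h a b w : a = b -> cpow h a w = cpow h b w.
Proof. intros ->. reflexivity. Qed.

Lemma is_Cderive_cpow h a z : holoD h -> inD z ->
  is_Cderive (cpow h a) z (RtoC a * Cderiv h z * cpow h a z).
Proof.
  intros Hh Hz. unfold cpow.
  apply (is_Cderive_comp Cexp (fun w => RtoC a * h w)); [apply is_Cderive_Cexp|].
  apply is_Cderive_scal, holoD_is_Cderive; auto.
Qed.

Lemma holoD_cpow h a : holoD h -> holoD (cpow h a).
Proof. intros Hh. apply holoD_intro. intros z Hz. eexists. apply is_Cderive_cpow; auto. Qed.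

Lemma Cderiv_cpow h a z : holoD h -> inD z ->
  Cderiv (cpow h a) z = RtoC a * Cderiv h z * cpow h a z.
Proof. intros Hh Hz. apply is_Cderive_Cderiv, is_Cderive_cpow; auto. Qed.

Section Lemma5p2.

Variables (g h : C -> C).

Hypotheses (g_holo : holoD g) (h_holo : holoD h) (exp_h : forall z, inD z -> Cexp (h z) = g z).

Lemma g_cpow_1 w : inD w -> g w = cpow h 1 w.
Proof. intros Hw. rewrite <- exp_h by exact Hw. unfold cpow. f_equal. ring. Qed.

Lemma Cderiv_g w : inD w -> Cderiv g w = Cderiv h w * g w.
Proof.
  intros Hw. apply is_Cderive_Cderiv. rewrite <- exp_h by exact Hw.
  apply (is_Cderive_ext_loc (fun x => Cexp (h x))).
  - exists (1 - Cmod w)%R. split; [unfold inD in Hw; lra|].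
    intros x Hx. apply exp_h, (inD_near w); auto.
  - apply (is_Cderive_comp Cexp h); [apply is_Cderive_Cexp | apply holoD_is_Cderive; auto].
Qed.

Variables (beta eps : R) (f : C -> C).

Hypotheses (eps_neq_1 : eps <> 1%R) (f_holo : holoD f).

Local Notation U := (cpow h beta).
Local Notation A := (Top (cpow h beta) f).
Local Notation c1 := (RtoC ((2 * beta - 1) * beta / (1 - eps))).
Local Notation c2 := (RtoC (beta ^ 2 / (1 - eps))).
Local Notation Y1 := (Top (cpow h (1 - eps)) (Mop (cpow h (2 * beta - 2 + eps)) A)).
Local Notation Y2 := (Top (cpow h (1 - eps)) (Mop (cpow h (3 * beta - 2 + eps)) f)).

Lemma holoD_A : holoD A.
Proof. exact (holoD_Top _ _ (holoD_cpow h beta h_holo) f_holo). Qed.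

Lemma holoD_Mop_A : holoD (Mop (cpow h (2 * beta - 2 + eps)) A).
Proof. exact (holoD_Mop _ _ (holoD_cpow h _ h_holo) holoD_A). Qed.

Lemma holoD_Mop_f : holoD (Mop (cpow h (3 * beta - 2 + eps)) f).
Proof. exact (holoD_Mop _ _ (holoD_cpow h _ h_holo) f_holo). Qed.

Lemma lincomb_Y1_Y2 w : inD w -> c1 * Y1 w + c2 * Y2 w = RtoC beta * cpow h (2 * beta - 1) w * A w.
Proof.
  intros Hw.
  apply (eq_of_same_Cderive (fun x => c1 * Y1 x + c2 * Y2 x)
           (fun x => RtoC beta * cpow h (2 * beta - 1) x * A x)
           (fun x => c1 * (Mop (cpow h (2 * beta - 2 + eps)) A x * Cderiv (cpow h (1 - eps)) x)
                   + c2 * (Mop (cpow h (3 * beta - 2 + eps)) f x * Cderiv (cpow h (1 - eps)) x)));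
    [| | rewrite !Top_0; ring | exact Hw].
  - intros x Hx. apply is_Cderive_plus; apply is_Cderive_scal.
    + exact (is_Cderive_Top _ _ x (holoD_cpow h _ h_holo) holoD_Mop_A Hx).
    + exact (is_Cderive_Top _ _ x (holoD_cpow h _ h_holo) holoD_Mop_f Hx).
  - intros x Hx.
    apply (is_Cderive_eq _ _
             (RtoC beta * (RtoC (2 * beta - 1) * Cderiv h x * cpow h (2 * beta - 1) x) * A x
              + RtoC beta * cpow h (2 * beta - 1) x * (f x * Cderiv U x))).
    + apply (is_Cderive_mult (fun y => RtoC beta * cpow h (2 * beta - 1) y) A).
      * exact (is_Cderive_scal _ _ x _ (is_Cderive_cpow h _ x h_holo Hx)).
      * exact (is_Cderive_Top _ _ x (holoD_cpow h beta h_holo) f_holo Hx).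
    + unfold Mop. rewrite !(Cderiv_cpow h _ x h_holo Hx).
      replace (cpow h (2 * beta - 1) x)
        with (cpow h (2 * beta - 2 + eps) x * cpow h (1 - eps) x)
        by (rewrite cpow_plus; apply cpow_ext; ring).
      replace (cpow h (3 * beta - 2 + eps) x) with (cpow h (2 * beta - 2 + eps) x * U x)
        by (rewrite cpow_plus; apply cpow_ext; ring).
      assert (Heps : RtoC 1 - RtoC eps <> 0).
      { rewrite <- RtoC_minus. intro E. apply RtoC_inj in E. lra. }
      rewrite !RtoC_div by lra.
      repeat progress (rewrite ?RtoC_minus, ?RtoC_mult, ?RtoC_plus, ?RtoC_pow).
      field. exact Heps.
Qed.

Theorem Sop_Top_Top_eq z : inD z -> Sop U (Top U A) z = c1 * Top g Y1 z + c2 * Top g Y2 z.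
Proof.
  intros Hz.
  assert (HU := holoD_cpow h beta h_holo).
  rewrite (Top_lincomb c1 c2 g Y1 Y2 z g_holo (holoD_Top _ _ (holoD_cpow h _ h_holo) holoD_Mop_A)
             (holoD_Top _ _ (holoD_cpow h _ h_holo) holoD_Mop_f) Hz).
  rewrite (Sop_Top U U A z HU HU holoD_A Hz).
  apply cint0_ext; [|exact Hz]. intros w Hw.
  rewrite (lincomb_Y1_Y2 w Hw), (Cderiv_g w Hw), (Cderiv_cpow h beta w h_holo Hw), (g_cpow_1 w Hw).
  assert (E : cpow h (2 * beta - 1) w * cpow h 1 w = U w * U w)
    by (rewrite !cpow_plus; apply cpow_ext; ring).
  transitivity (RtoC beta * A w * Cderiv h w * (cpow h (2 * beta - 1) w * cpow h 1 w));
    [rewrite E | ]; ring.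
Qed.

End Lemma5p2.

Close Scope C_scope.

Theorem lemma5p2 (g h : C -> C) :
  holoD g ->
  (forall z, inD z -> g z <> RtoC 0) ->
  holoD h ->
  (forall z, inD z -> Cexp (h z) = g z) ->
  forall (beta eps : R), eps <> 1 ->
  forall f : C -> C, holoD f ->
  forall z, inD z ->
    Sop (cpow h beta) (Top (cpow h beta) (Top (cpow h beta) f)) z =
    Cplus
      (Cmult (RtoC ((2 * beta - 1) * beta / (1 - eps)))
         (Top g (Top (cpow h (1 - eps))
            (Mop (cpow h (2 * beta - 2 + eps)) (Top (cpow h beta) f))) z))
      (Cmult (RtoC (beta ^ 2 / (1 - eps)))
         (Top g (Top (cpow h (1 - eps))
            (Mop (cpow h (3 * beta - 2 + eps)) f)) z)).
Proof.
  intros Hg _ Hh Hexp beta eps Heps f Hf z Hz.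
  exact (Sop_Top_Top_eq g h Hg Hh Hexp beta eps f Heps Hf z Hz).
Qed.
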